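(* Let $X$ be a real Banach space with a basis $(e_k)_{k=1}^N$, where $1\le N\le\infty$, with biorthogonal functionals $(e_k^* )$. Suppose $1\le m_1<m_2<\dots<m_n<N$ and that for every $x\in[e_j]_{j=1}^{m_1}$ the sequence $\{x,e_{m_1+1},e_{m_1+2},\dots\}$ is skipped $\lambda$-unconditional. Let $x^*,y^*\in X^*\setminus\{0\}$ satisfy $x^*\in[e_k^*]_{k=1}^{m_1}$ and $y^*(e_j)=0$ for $1\le j\le m_n$. Then $\{x^*,e^*_{m_2},\dots,e^*_{m_{n-1}},y^*\}$ is a dual skipped $\lambda$-unconditional basis of its linear span. In particular this conclusion holds whenever $(e_k)_{k=1}^N$ itself is skipped $\lambda$-unconditional.
   Context: A basic sequence $(e_k)_{k=1}^N$ ($1\le N\le\infty$) is skipped $\lambda$-unconditional if whenever $0=m_0<m_1<\dots<m_n<\infty$ with $m_j-m_{j-1}\ge2$ for $1\le j\le n$, and $y_j\in[e_i]_{i=m_{j-1}+1}^{m_j-1}$ (spans taken only over indices $i\le N$), then $\|\sum_{j=1}^n\epsilon_jy_j\|\le\lambda\|\sum_{j=1}^ny_j\|$ for all signs $\epsilon_j=\pm1$. A basis $(f_k)_{k=1}^M$ of a finite-dimensional space $F$ is dual skipped $\lambda$-unconditional if its dual (biorthogonal) basis $(f_k^* )_{k=1}^M$ in $F^*$ is skipped $\lambda$-unconditional. $[\,\cdot\,]$ denotes closed linear span. *)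

From Stdlib Require Import Reals List Arith ClassicalEpsilon.
Open Scope R_scope.

Record NormedSpace := {
  carrier :> Type;
  vzero : carrier;
  vadd : carrier -> carrier -> carrier;
  vopp : carrier -> carrier;
  vscal : R -> carrier -> carrier;
  vnorm : carrier -> R;
  vadd_assoc : forall x y z, vadd x (vadd y z) = vadd (vadd x y) z;
  vadd_comm : forall x y, vadd x y = vadd y x;
  vadd_0 : forall x, vadd x vzero = x;
  vadd_opp : forall x, vadd x (vopp x) = vzero;
  vscal_1 : forall x, vscal 1 x = x;
  vscal_assoc : forall a b x, vscal a (vscal b x) = vscal (a * b) x;
  vscal_distr_l : forall a b x, vscal (a + b) x = vadd (vscal a x) (vscal b x);
  vscal_distr_r : forall a x y, vscal a (vadd x y) = vadd (vscal a x) (vscal a y);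
  vnorm_nonneg : forall x, 0 <= vnorm x;
  vnorm_eq0 : forall x, vnorm x = 0 -> x = vzero;
  vnorm_scal : forall a x, vnorm (vscal a x) = Rabs a * vnorm x;
  vnorm_triangle : forall x y, vnorm (vadd x y) <= vnorm x + vnorm y
}.

Arguments vzero {_}. Arguments vadd {_}. Arguments vopp {_}.
Arguments vscal {_}. Arguments vnorm {_}.

Definition vsub {X : NormedSpace} (x y : X) : X := vadd x (vopp y).

Definition complete (X : NormedSpace) : Prop :=
  forall u : nat -> X,
    (forall eps, 0 < eps -> exists M, forall p q, (M <= p)%nat -> (M <= q)%nat ->
       vnorm (vsub (u p) (u q)) < eps) ->
    exists l : X, forall eps, 0 < eps -> exists M, forall p, (M <= p)%nat ->
       vnorm (vsub (u p) l) < eps.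

Definition gsum {T : Type} (zero : T) (add : T -> T -> T)
  (l : list nat) (f : nat -> T) : T :=
  fold_right (fun i acc => add (f i) acc) zero l.

(** Lengths 1 <= N <= infinity : [Some n] is n, [None] is infinity.
    Sequences are indexed by nat, from 1. *)
Definition in_len (N : option nat) (k : nat) : Prop :=
  (1 <= k)%nat /\ match N with Some n => (k <= n)%nat | None => True end.

Definition lt_len (m : nat) (N : option nat) : Prop :=
  match N with Some n => (m < n)%nat | None => True end.

(** y lies in the linear span of (e_i), a <= i < a + len, restricted to
    indices i <= N.  (Finite dimensional, hence equal to the closed span.) *)
Definition block_span {T : Type} (zero : T) (add : T -> T -> T)
  (scal : R -> T -> T) (N : option nat) (e : nat -> T) (a len : nat) (y : T) : Prop :=
  exists c : nat -> R, (forall i, ~ in_len N i -> c i = 0) /\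
    y = gsum zero add (seq a len) (fun i => scal (c i) (e i)).

Definition skipped_uncond {T : Type} (zero : T) (add : T -> T -> T)
  (scal : R -> T -> T) (norm : T -> R) (N : option nat) (e : nat -> T)
  (lam : R) : Prop :=
  forall (n : nat) (m : nat -> nat) (y : nat -> T) (eps : nat -> R),
    m 0%nat = 0%nat ->
    (forall j, (1 <= j <= n)%nat -> (m (j - 1) + 2 <= m j)%nat) ->
    (forall j, (1 <= j <= n)%nat ->
       block_span zero add scal N e (m (j - 1) + 1)%nat (m j - m (j - 1) - 1)%nat (y j)) ->
    (forall j, (1 <= j <= n)%nat -> eps j = 1 \/ eps j = -1) ->
    norm (gsum zero add (seq 1 n) (fun j => scal (eps j) (y j)))
      <= lam * norm (gsum zero add (seq 1 n) y).

Definition skipped_uncond_X (X : NormedSpace) (N : option nat) (e : nat -> X)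
  (lam : R) : Prop :=
  skipped_uncond (@vzero X) (@vadd X) (@vscal X) (@vnorm X) N e lam.

Definition expands (X : NormedSpace) (N : option nat) (e : nat -> X)
  (a : nat -> R) (x : X) : Prop :=
  match N with
  | Some n => x = gsum vzero vadd (seq 1 n) (fun k => vscal (a k) (e k))
  | None => forall eps, 0 < eps -> exists M, forall p, (M <= p)%nat ->
      vnorm (vsub (gsum vzero vadd (seq 1 p) (fun k => vscal (a k) (e k))) x) < eps
  end.

Definition is_basis (X : NormedSpace) (N : option nat) (e : nat -> X) : Prop :=
  (forall x : X, exists a, expands X N e a x) /\
  (forall (x : X) a b, expands X N e a x -> expands X N e b x ->
     forall k, in_len N k -> a k = b k).

Definition biorthogonal (X : NormedSpace) (N : option nat) (e : nat -> X)
  (estar : nat -> X -> R) : Prop :=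
  forall (x : X) a, expands X N e a x -> forall k, in_len N k -> estar k x = a k.

Definition is_linear_fun (X : NormedSpace) (f : X -> R) : Prop :=
  forall (a b : R) (x y : X), f (vadd (vscal a x) (vscal b y)) = a * f x + b * f y.

Definition in_dual (X : NormedSpace) (f : X -> R) : Prop :=
  is_linear_fun X f /\ exists C, forall x, Rabs (f x) <= C * vnorm x.

(** Supremum (classical choice of a least upper bound; 0 if there is none). *)
Definition Rsup (E : R -> Prop) : R :=
  epsilon (inhabits 0) (fun r => is_lub E r).

Definition dnorm (X : NormedSpace) (g : X -> R) : R :=
  Rsup (fun r => exists v : X, vnorm v <= 1 /\ r = Rabs (g v)).

Definition inF (X : NormedSpace) (L : nat) (f : nat -> X -> R) (g : X -> R) : Prop :=
  exists c : nat -> R, forall v, g v = gsum 0 Rplus (seq 1 L) (fun k => c k * f k v).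

(** The space F^* (functionals on F), with the dual norm of F ⊆ X^*. *)
Definition Fs_zero (X : NormedSpace) : (X -> R) -> R := fun _ => 0.
Definition Fs_add (X : NormedSpace) (p q : (X -> R) -> R) : (X -> R) -> R :=
  fun g => p g + q g.
Definition Fs_scal (X : NormedSpace) (a : R) (p : (X -> R) -> R) : (X -> R) -> R :=
  fun g => a * p g.
Definition Fs_norm (X : NormedSpace) (L : nat) (f : nat -> X -> R)
  (p : (X -> R) -> R) : R :=
  Rsup (fun r => exists g, inF X L f g /\ dnorm X g <= 1 /\ r = Rabs (p g)).

(** (f_k)_{k=1}^L is a dual skipped lambda-unconditional basis of its span F:
    it is linearly independent (so a basis of F) and its biorthogonal basis
    the functionals f_k^* (1<=k<=L) in F^* is skipped lambda-unconditional. *)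
Definition dual_skipped_uncond_basis (X : NormedSpace) (L : nat)
  (f : nat -> X -> R) (lam : R) : Prop :=
  (forall c : nat -> R,
     (forall v, gsum 0 Rplus (seq 1 L) (fun k => c k * f k v) = 0) ->
     forall k, (1 <= k <= L)%nat -> c k = 0) /\
  exists fstar : nat -> (X -> R) -> R,
    (forall k, (1 <= k <= L)%nat -> forall g h a b,
       inF X L f g -> inF X L f h ->
       fstar k (fun v => a * g v + b * h v) = a * fstar k g + b * fstar k h) /\
    (forall k l, (1 <= k <= L)%nat -> (1 <= l <= L)%nat ->
       fstar k (f l) = if Nat.eqb k l then 1 else 0) /\
    skipped_uncond (Fs_zero X) (Fs_add X) (Fs_scal X) (Fs_norm X L f)
      (Some L) fstar lam.

Definition shifted_seq (X : NormedSpace) (e : nat -> X) (m1 : nat) (x : X) : nat -> X :=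
  fun k => if Nat.eqb k 1 then x else e (m1 + k - 1)%nat.

Definition shifted_len (N : option nat) (m1 : nat) : option nat :=
  match N with Some n => Some (n - m1 + 1)%nat | None => None end.

(** The sequence {x^*, e^*_{m_2}, ..., e^*_{m_{n-1}}, y^*} (length max 2 n). *)
Definition functional_seq (X : NormedSpace) (estar : nat -> X -> R) (m : nat -> nat)
  (n : nat) (xs ys : X -> R) : nat -> X -> R :=
  fun j => if Nat.eqb j 1 then xs
           else if Nat.ltb j (Nat.max 2 n) then estar (m j) else ys.

From Stdlib Require Import Reals List Arith Lra Lia ClassicalEpsilon Classical
  FunctionalExtensionality PropExtensionality.
Open Scope R_scope.

(** Write [f_1 = x*], [f_k = e*_(m_k)] for [2 <= k < L] and [f_L = y*], where
    [L = max 2 n], and let [F] be the span of the [f_k] in [X^*].  The proof runs as follows.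
    - The [f_k] are bounded: for [e*_(m_k)] this is Banach's theorem that the partial sum
      projections of a basis of a Banach space are uniformly bounded, proved here by a
      Baire category argument.  They are biorthogonal to vectors [vv_l] (built from [e_i],
      [i <= m_1], from [e_(m_l)], and from a tail of a vector not killed by [y*]), so every
      element of [F^*] is an evaluation [g |-> g W] with [W] in [X].
    - By Hahn-Banach in finite dimension, the norm in [F^*] of evaluation at [W] is the
      quotient norm [inf { |z| : f_k z = f_k W for all k }].
    - A block of the dual basis [(f_k^* )] is evaluation at a vector [w_j] whose
      [f]-coordinates live in that block, so flipping the signs of blocks multiplies the
      [f]-coordinates by signs [tau_k].  Given [z] with the same [f]-coordinates as
      [sum w_j], a partial sum of [z] is cut into blocks of [(e_i)] at the indices
      [m_(mm_j)], where the coordinates of [z] vanish; skipped unconditionality of [(e_i)]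
      beyond [m_1] (which both hypotheses of the lemma provide) and a passage to the limit
      give [|g (sum eps_j w_j)| <= lam |z|] for all [g] in the unit ball of [F]. *)

Arguments vadd_assoc {_}. Arguments vadd_comm {_}. Arguments vadd_0 {_}.
Arguments vadd_opp {_}. Arguments vscal_1 {_}. Arguments vscal_assoc {_}.
Arguments vscal_distr_l {_}. Arguments vscal_distr_r {_}. Arguments vnorm_nonneg {_}.
Arguments vnorm_eq0 {_}. Arguments vnorm_scal {_}. Arguments vnorm_triangle {_}.

Lemma Rsup_spec (E : R -> Prop) :
  (exists x, E x) -> (exists b, forall x, E x -> x <= b) -> is_lub E (Rsup E).
Proof.
  intros Hne [b Hb]. unfold Rsup. apply epsilon_spec.
  destruct (completeness E) as [l Hl]; [exists b; exact Hb | exact Hne |].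
  exists l; exact Hl.
Qed.

Lemma Rsup_ub (E : R -> Prop) x b : (forall y, E y -> y <= b) -> E x -> x <= Rsup E.
Proof. intros Hb Hx. destruct (Rsup_spec E) as [H1 _]; eauto. Qed.

Lemma Rsup_le (E : R -> Prop) b : (exists x, E x) -> (forall y, E y -> y <= b) -> Rsup E <= b.
Proof. intros Hne Hb. destruct (Rsup_spec E) as [_ H2]; eauto. Qed.

Lemma Rsup_approx (E : R -> Prop) b eps : (exists x, E x) -> (forall y, E y -> y <= b) ->
  0 < eps -> exists x, E x /\ Rsup E - eps < x.
Proof.
  intros Hne Hb He. destruct (Rsup_spec E Hne (ex_intro _ b Hb)) as [H1 H2].
  destruct (classic (exists x, E x /\ Rsup E - eps < x)) as [H|H]; auto.
  exfalso. assert (Rsup E <= Rsup E - eps); [|lra].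
  apply H2. intros y Hy. destruct (Rle_dec y (Rsup E - eps)); auto.
  exfalso; apply H; exists y; split; auto; lra.
Qed.

Lemma Rsup_ext (E F : R -> Prop) : (forall x, E x <-> F x) -> Rsup E = Rsup F.
Proof.
  intros H. assert (E = F) as ->; [|reflexivity].
  apply functional_extensionality; intros; apply propositional_extensionality; auto.
Qed.

Lemma choice_fun {A B : Type} (b0 : B) (P : A -> B -> Prop) :
  (forall a, exists b, P a b) -> exists f : A -> B, forall a, P a (f a).
Proof.
  intros H. exists (fun a => epsilon (inhabits b0) (P a)). intros a. apply epsilon_spec, H.
Qed.

Fixpoint iter_seq {A : Type} (a0 : A) (f : nat -> A -> A) (n : nat) : A :=
  match n with O => a0 | S i => f i (iter_seq a0 f i) end.

Lemma half_pow_small eps : 0 < eps -> exists i, (1/2)^i < eps.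
Proof.
  intros He. destruct (pow_lt_1_zero (1/2) ltac:(rewrite Rabs_right; lra) eps He) as [n Hn].
  exists n. specialize (Hn n ltac:(lia)). rewrite Rabs_right in Hn; auto.
  apply Rle_ge, pow_le; lra.
Qed.

Lemma half_pow_mono (L l : nat) : (L <= l)%nat -> (1/2)^l <= (1/2)^L.
Proof.
  intros H. induction H. lra. simpl. assert (0 <= (1/2)^m) by (apply pow_le; lra). lra.
Qed.

Lemma geometric_small c : 0 <= c ->
  forall eps, 0 < eps -> exists L, forall l, (L <= l)%nat -> c * (1/2)^l < eps.
Proof.
  intros Hc eps He. destruct (half_pow_small (eps / (c + 1))) as [L HL].
  { apply Rdiv_lt_0_compat; lra. }
  exists L. intros l Hl. pose proof (half_pow_mono L l Hl).
  assert (0 <= (1/2)^l) by (apply pow_le; lra).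
  apply Rle_lt_trans with ((c + 1) * (1/2)^L); [nra|].
  apply (Rmult_lt_reg_r (/ (c + 1))). apply Rinv_0_lt_compat; lra.
  rewrite Rmult_comm, <- Rmult_assoc, Rinv_l, Rmult_1_l by lra. exact HL.
Qed.

Section VectorAlgebra.
Context {X : NormedSpace}.
Implicit Types x y a b c d : X.

Lemma vadd_0l x : vadd vzero x = x.
Proof. rewrite vadd_comm; apply vadd_0. Qed.

Lemma vadd_cancel_l a b c : vadd a b = vadd a c -> b = c.
Proof.
  intros H. rewrite <- (vadd_0l b), <- (vadd_0l c).
  rewrite <- (vadd_opp a), (vadd_comm a (vopp a)), <- !vadd_assoc, H. reflexivity.
Qed.

Lemma vscal_0 x : vscal 0 x = vzero.
Proof.
  apply (vadd_cancel_l (vscal 0 x)). rewrite vadd_0, <- vscal_distr_l, Rplus_0_l. reflexivity.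
Qed.

Lemma vscal_z t : vscal t (@vzero X) = vzero.
Proof. rewrite <- (vscal_0 vzero) at 1. rewrite vscal_assoc, Rmult_0_r. apply vscal_0. Qed.

Lemma vopp_unique x y : vadd x y = vzero -> y = vopp x.
Proof. intros H. apply (vadd_cancel_l x). rewrite H, vadd_opp. reflexivity. Qed.

Lemma vopp_scal x : vopp x = vscal (-1) x.
Proof.
  symmetry; apply vopp_unique. rewrite <- (vscal_1 x) at 1.
  rewrite <- vscal_distr_l. replace (1 + -1) with 0 by ring. apply vscal_0.
Qed.

Lemma vopp_add a b : vopp (vadd a b) = vadd (vopp a) (vopp b).
Proof. rewrite !vopp_scal. apply vscal_distr_r. Qed.

Lemma vopp_opp a : vopp (vopp a) = a.
Proof. rewrite !vopp_scal, vscal_assoc. replace (-1 * -1) with 1 by ring. apply vscal_1. Qed.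

Lemma vnorm_z : vnorm (@vzero X) = 0.
Proof. rewrite <- (vscal_0 vzero), vnorm_scal, Rabs_R0; ring. Qed.

Lemma vnorm_opp x : vnorm (vopp x) = vnorm x.
Proof.
  rewrite vopp_scal, vnorm_scal. replace (Rabs (-1)) with 1 by (rewrite Rabs_left; lra). ring.
Qed.

Lemma vsub_diag x : vsub x x = vzero.
Proof. apply vadd_opp. Qed.

Lemma vsub_0r x : vsub x vzero = x.
Proof. unfold vsub. rewrite vopp_scal, vscal_z, vadd_0. reflexivity. Qed.

Lemma vadd4 a b c d : vadd (vadd a b) (vadd c d) = vadd (vadd a c) (vadd b d).
Proof.
  rewrite <- !vadd_assoc. f_equal. rewrite !vadd_assoc, (vadd_comm b c). reflexivity.
Qed.

Lemma vsub_add a b c d : vsub (vadd a b) (vadd c d) = vadd (vsub a c) (vsub b d).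
Proof. unfold vsub. rewrite vopp_add. apply vadd4. Qed.

Lemma vscal_sub t a b : vscal t (vsub a b) = vsub (vscal t a) (vscal t b).
Proof.
  unfold vsub. rewrite vscal_distr_r, !vopp_scal, !vscal_assoc. f_equal; f_equal; ring.
Qed.

Lemma vsub_scal_l s t a : vsub (vscal s a) (vscal t a) = vscal (s - t) a.
Proof. unfold vsub. rewrite vopp_scal, vscal_assoc, <- vscal_distr_l. f_equal; ring. Qed.

Lemma vsub_eq0 a b : vsub a b = vzero -> a = b.
Proof. intros H. rewrite <- (vopp_opp a), <- (vopp_unique _ _ H), vopp_opp. reflexivity. Qed.

Lemma vsub_tri a b c : vsub a c = vadd (vsub a b) (vsub b c).
Proof.
  unfold vsub. rewrite <- vadd_assoc. f_equal.
  rewrite vadd_assoc, (vadd_comm (vopp b) b), vadd_opp, vadd_0l. reflexivity.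
Qed.

Lemma vsub_add_l a b : vsub (vadd a b) a = b.
Proof.
  unfold vsub. rewrite (vadd_comm a b), <- vadd_assoc, vadd_opp, vadd_0. reflexivity.
Qed.

Lemma vsub_sub_l a b c : vsub (vsub a b) (vsub a c) = vsub c b.
Proof.
  unfold vsub. rewrite vopp_add, vopp_opp, vadd4, vadd_opp, vadd_0l, vadd_comm. reflexivity.
Qed.

Lemma vsub_sub_r a b c : vsub a (vsub b c) = vadd (vsub a b) c.
Proof. unfold vsub. rewrite vopp_add, vopp_opp, vadd_assoc. reflexivity. Qed.

Lemma vsub_regroup a b c d : vsub (vsub a b) d = vsub (vsub a (vadd c d)) (vsub b c).
Proof.
  unfold vsub. rewrite !vopp_add, vopp_opp, vadd4. f_equal.
  rewrite vadd_comm, vadd_assoc, vadd_opp, vadd_0l. reflexivity.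
Qed.

Lemma vnorm_sub_sym a b : vnorm (vsub a b) = vnorm (vsub b a).
Proof.
  replace (vsub b a) with (vopp (vsub a b)). apply eq_sym, vnorm_opp.
  unfold vsub. rewrite vopp_add, vopp_opp, vadd_comm. reflexivity.
Qed.

Lemma vnorm_sub_tri a b c : vnorm (vsub a c) <= vnorm (vsub a b) + vnorm (vsub b c).
Proof. rewrite (vsub_tri a b c). apply vnorm_triangle. Qed.

Lemma vnorm_sub_le a b : vnorm (vsub a b) <= vnorm a + vnorm b.
Proof. unfold vsub. eapply Rle_trans. apply vnorm_triangle. rewrite vnorm_opp. lra. Qed.

Lemma vnorm_add_sub a b : vnorm a <= vnorm b + vnorm (vsub a b).
Proof. pose proof (vnorm_sub_tri a b vzero). rewrite !vsub_0r in H. lra. Qed.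

Lemma vlim_unique a b : (forall eps, 0 < eps -> vnorm (vsub a b) < eps) -> a = b.
Proof.
  intros H. apply vsub_eq0, vnorm_eq0. pose proof (vnorm_nonneg (vsub a b)).
  destruct H0 as [H0|H0]; auto. specialize (H _ H0). lra.
Qed.

End VectorAlgebra.

Lemma gsum_ext {T} (z : T) add l f g :
  (forall i, In i l -> f i = g i) -> gsum z add l f = gsum z add l g.
Proof. induction l; simpl; intros H; auto. rewrite H by auto. f_equal. apply IHl; auto. Qed.

Lemma gsum_app {T} (z : T) add l1 l2 f
  (Hz : forall x, add z x = x) (Ha : forall x y w, add x (add y w) = add (add x y) w) :
  gsum z add (l1 ++ l2) f = add (gsum z add l1 f) (gsum z add l2 f).
Proof. induction l1; simpl; auto. rewrite IHl1, Ha; auto. Qed.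

Lemma gsum_shift {T : Type} (z : T) add len a b (F : nat -> T) :
  gsum z add (seq a len) (fun k => F (k + b)%nat) = gsum z add (seq (a + b) len) F.
Proof. revert a. induction len; intros a; simpl; auto. rewrite IHlen. f_equal. Qed.

Section VectorSums.
Context {X : NormedSpace}.

Lemma vgsum_app l1 l2 (f : nat -> X) :
  gsum vzero vadd (l1 ++ l2) f = vadd (gsum vzero vadd l1 f) (gsum vzero vadd l2 f).
Proof. apply gsum_app; [apply vadd_0l | apply vadd_assoc]. Qed.

Lemma vgsum_add l (f g : nat -> X) :
  gsum vzero vadd l (fun i => vadd (f i) (g i)) =
  vadd (gsum vzero vadd l f) (gsum vzero vadd l g).
Proof. induction l; simpl. rewrite vadd_0; auto. rewrite IHl. apply vadd4. Qed.

Lemma vgsum_scal l t (f : nat -> X) :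
  gsum vzero vadd l (fun i => vscal t (f i)) = vscal t (gsum vzero vadd l f).
Proof. induction l; simpl. rewrite vscal_z; auto. rewrite IHl, vscal_distr_r; auto. Qed.

Lemma vgsum_telescope (A : nat -> X) r :
  gsum vzero vadd (seq 1 r) (fun j => vsub (A j) (A (j - 1)%nat)) = vsub (A r) (A 0%nat).
Proof.
  induction r.
  - simpl. rewrite vsub_diag. auto.
  - rewrite seq_S, vgsum_app, IHr. simpl. rewrite vadd_0. replace (r - 0)%nat with r by lia.
    rewrite vadd_comm, (vsub_tri (A (S r)) (A r) (A 0%nat)). reflexivity.
Qed.

End VectorSums.

Lemma rgsum_app l1 l2 (f : nat -> R) :
  gsum 0 Rplus (l1 ++ l2) f = gsum 0 Rplus l1 f + gsum 0 Rplus l2 f.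
Proof. apply gsum_app; intros; ring. Qed.

Lemma rgsum_add l (f g : nat -> R) :
  gsum 0 Rplus l (fun i => f i + g i) = gsum 0 Rplus l f + gsum 0 Rplus l g.
Proof. induction l; simpl. ring. rewrite IHl; ring. Qed.

Lemma rgsum_scal l t (f : nat -> R) :
  gsum 0 Rplus l (fun i => t * f i) = t * gsum 0 Rplus l f.
Proof. induction l; simpl. ring. rewrite IHl; ring. Qed.

Lemma rgsum_zero l (f : nat -> R) : (forall i, In i l -> f i = 0) -> gsum 0 Rplus l f = 0.
Proof. induction l; simpl; intros H; auto. rewrite H, IHl; auto; ring. Qed.

Lemma rgsum_abs l (f : nat -> R) :
  Rabs (gsum 0 Rplus l f) <= gsum 0 Rplus l (fun i => Rabs (f i)).
Proof.
  induction l; simpl. rewrite Rabs_R0; lra.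
  eapply Rle_trans. apply Rabs_triang. lra.
Qed.

Lemma rgsum_le l (f g : nat -> R) :
  (forall i, In i l -> f i <= g i) -> gsum 0 Rplus l f <= gsum 0 Rplus l g.
Proof.
  induction l; simpl; intros H. lra.
  pose proof (H a (or_introl eq_refl)). pose proof (IHl (fun i Hi => H i (or_intror Hi))). lra.
Qed.

Lemma rgsum_nonneg l (f : nat -> R) : (forall i, In i l -> 0 <= f i) -> 0 <= gsum 0 Rplus l f.
Proof.
  intros H. apply Rle_trans with (gsum 0 Rplus l (fun _ => 0)).
  - rewrite rgsum_zero by auto. lra.
  - apply rgsum_le, H.
Qed.

Lemma gsum_term_le l (f : nat -> R) p :
  (forall i, 0 <= f i) -> In p l -> f p <= gsum 0 Rplus l f.
Proof.
  intros Hf. induction l; simpl; [tauto|]. intros [->|H].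
  - pose proof (rgsum_nonneg l f (fun i _ => Hf i)). lra.
  - specialize (IHl H). specialize (Hf a). lra.
Qed.

Lemma rgsum_single a len j (F : nat -> R) : (forall i, i <> j -> F i = 0) ->
  gsum 0 Rplus (seq a len) F = if (Nat.leb a j && Nat.ltb j (a + len))%bool then F j else 0.
Proof.
  intros H. revert a. induction len; intros a; simpl.
  - destruct (Nat.leb_spec a j); destruct (Nat.ltb_spec j (a + 0)); simpl; auto; lia.
  - rewrite IHlen. destruct (Nat.eqb_spec a j).
    + subst. rewrite Nat.leb_refl. destruct (Nat.leb_spec (S j) j); [lia|]. simpl.
      destruct (Nat.ltb_spec j (j + S len)); [|lia]. ring.
    + rewrite H by auto. rewrite Rplus_0_l. replace (S a + len)%nat with (a + S len)%nat by lia.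
      destruct (Nat.leb_spec (S a) j); destruct (Nat.leb_spec a j); try lia; simpl; auto.
Qed.

Lemma rgsum_pick a len j (F : nat -> R) : (a <= j < a + len)%nat ->
  (forall i, In i (seq a len) -> i <> j -> F i = 0) -> gsum 0 Rplus (seq a len) F = F j.
Proof.
  intros Hj HF. rewrite (gsum_ext _ _ _ _ (fun i => if Nat.eqb i j then F j else 0)).
  - rewrite (rgsum_single a len j) by (intros i Hi; destruct (Nat.eqb_spec i j); tauto).
    rewrite Nat.eqb_refl. destruct (Nat.leb_spec a j); [|lia].
    destruct (Nat.ltb_spec j (a + len)); [auto|lia].
  - intros i Hi. destruct (Nat.eqb_spec i j) as [->|]; auto.
Qed.

Lemma rgsum_kronecker l (d : nat -> R) i0 : NoDup l -> In i0 l ->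
  gsum 0 Rplus l (fun i => d i * (if Nat.eqb i0 i then 1 else 0)) = d i0.
Proof.
  induction l; simpl; intros Hn Hi; [tauto|]. inversion Hn; subst.
  destruct Hi as [->|Hi].
  - rewrite Nat.eqb_refl, rgsum_zero. ring.
    intros i Hi. destruct (Nat.eqb_spec i0 i); subst; [tauto|ring].
  - destruct (Nat.eqb_spec i0 a); subst; [tauto|]. rewrite IHl; auto. ring.
Qed.

Lemma Fs_gsum_eval (X : NormedSpace) l (F : nat -> (X -> R) -> R) g :
  gsum (Fs_zero X) (Fs_add X) l F g = gsum 0 Rplus l (fun i => F i g).
Proof. induction l; simpl; auto. unfold Fs_add at 1. rewrite IHl. auto. Qed.

Section LinearFunctionals.
Context {X : NormedSpace}.
Variable f : X -> R.
Hypothesis Hf : is_linear_fun X f.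

Lemma lin_add x y : f (vadd x y) = f x + f y.
Proof. pose proof (Hf 1 1 x y). rewrite !vscal_1 in H. rewrite H; ring. Qed.

Lemma lin_scal a x : f (vscal a x) = a * f x.
Proof. pose proof (Hf a 0 x x). rewrite vscal_0, vadd_0 in H. rewrite H; ring. Qed.

Lemma lin_zero : f vzero = 0.
Proof. rewrite <- (vscal_0 vzero), lin_scal. ring. Qed.

Lemma lin_sub x y : f (vsub x y) = f x - f y.
Proof. unfold vsub. rewrite lin_add, vopp_scal, lin_scal. ring. Qed.

Lemma lin_gsum l (g : nat -> X) :
  f (gsum vzero vadd l g) = gsum 0 Rplus l (fun i => f (g i)).
Proof. induction l; simpl. apply lin_zero. rewrite lin_add, IHl; auto. Qed.

End LinearFunctionals.

Definition comb {X : NormedSpace} (e : nat -> X) (c : nat -> R) (p : nat) : X :=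
  gsum vzero vadd (seq 1 p) (fun k => vscal (c k) (e k)).

Definition delta (k : nat) : nat -> R := fun i => if Nat.eqb i k then 1 else 0.

Section Combinations.
Context {X : NormedSpace}.
Variable e : nat -> X.

Lemma comb_0 c : comb e c 0 = vzero.
Proof. reflexivity. Qed.

Lemma comb_S c p : comb e c (S p) = vadd (comb e c p) (vscal (c (S p)) (e (S p))).
Proof. unfold comb. rewrite seq_S, vgsum_app. simpl. rewrite vadd_0. reflexivity. Qed.

Lemma comb_ext c d p : (forall k, (1 <= k <= p)%nat -> c k = d k) -> comb e c p = comb e d p.
Proof.
  intros H. unfold comb. apply gsum_ext. intros i Hi. apply in_seq in Hi. rewrite H by lia. auto.
Qed.

Lemma comb_stable c p q :
  (p <= q)%nat -> (forall k, (p < k <= q)%nat -> c k = 0) -> comb e c q = comb e c p.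
Proof.
  intros Hpq. induction Hpq; intros H; auto.
  rewrite comb_S, H by lia. rewrite vscal_0, vadd_0. apply IHHpq. intros; apply H; lia.
Qed.

Lemma comb_lin c d a b p :
  comb e (fun i => a * c i + b * d i) p = vadd (vscal a (comb e c p)) (vscal b (comb e d p)).
Proof.
  unfold comb. rewrite <- !vgsum_scal, <- vgsum_add. apply gsum_ext. intros i _.
  rewrite vscal_distr_l, !vscal_assoc. reflexivity.
Qed.

Lemma comb_delta k : (1 <= k)%nat -> comb e (delta k) k = e k.
Proof.
  intros Hk. destruct k; [lia|]. rewrite comb_S, (comb_stable _ 0 k) by
    (lia || (intros i Hi; unfold delta; destruct (Nat.eqb_spec i (S k)); auto; lia)).
  unfold delta. rewrite comb_0, Nat.eqb_refl, vadd_0l, vscal_1. reflexivity.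
Qed.

Lemma block_comb c a b : c b = 0 -> (a < b)%nat ->
  gsum vzero vadd (seq (a + 1) (b - a - 1)) (fun i => vscal (c i) (e i)) =
  vsub (comb e c b) (comb e c a).
Proof.
  intros Hcb Hab. unfold comb.
  replace b with (a + (b - a - 1) + 1)%nat at 2 by lia.
  rewrite !seq_app, !vgsum_app. replace (1 + (a + (b - a - 1)))%nat with b by lia.
  simpl. rewrite Hcb, vscal_0, !vadd_0. replace (a + 1)%nat with (S a) by lia.
  rewrite vsub_add_l. reflexivity.
Qed.

Lemma comb_conv (c : nat -> nat -> R) (a : nat -> R) :
  (forall k, Un_cv (fun l => c l k) (a k)) ->
  forall p eps, 0 < eps -> exists L, forall l, (L <= l)%nat ->
    vnorm (vsub (comb e (c l) p) (comb e a p)) < eps.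
Proof.
  intros Hc p. induction p; intros eps He.
  - exists 0%nat. intros l _. rewrite !comb_0, vsub_diag, vnorm_z. auto.
  - destruct (IHp (eps/2) ltac:(lra)) as [L1 H1].
    set (d := eps / (2 * (vnorm (e (S p)) + 1))).
    assert (Hd : 0 < d).
    { unfold d. apply Rdiv_lt_0_compat; auto. pose proof (vnorm_nonneg (e (S p))); lra. }
    destruct (Hc (S p) d Hd) as [L2 H2].
    exists (max L1 L2). intros l Hl. rewrite !comb_S, vsub_add, vsub_scal_l.
    eapply Rle_lt_trans. apply vnorm_triangle. rewrite vnorm_scal.
    specialize (H1 l ltac:(lia)). specialize (H2 l ltac:(lia)). unfold Rdist in H2.
    pose proof (vnorm_nonneg (e (S p))).
    assert (Rabs (c l (S p) - a (S p)) * vnorm (e (S p)) <= d * vnorm (e (S p)))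
      by (apply Rmult_le_compat_r; lra).
    assert (d * vnorm (e (S p)) < eps / 2).
    { unfold d. apply (Rmult_lt_reg_r (2 * (vnorm (e (S p)) + 1))). lra. field_simplify; lra. }
    lra.
Qed.

End Combinations.

Definition inb (N : option nat) (k : nat) : bool :=
  Nat.leb 1 k && match N with Some n => Nat.leb k n | None => true end.

Lemma inb_spec N k : inb N k = true <-> in_len N k.
Proof.
  unfold inb, in_len. destruct N; rewrite Bool.andb_true_iff, Nat.leb_le; [rewrite Nat.leb_le|]; tauto.
Qed.

Lemma inb_false N k : inb N k = false <-> ~ in_len N k.
Proof. rewrite <- inb_spec. destruct (inb N k); split; congruence. Qed.

Definition zero_out (N : option nat) (c : nat -> R) : Prop := forall k, ~ in_len N k -> c k = 0.

Lemma delta_zero_out N k : in_len N k -> zero_out N (delta k).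
Proof. intros Hk i Hi. unfold delta. destruct (Nat.eqb_spec i k); subst; tauto. Qed.

Section Basis.
Variable X : NormedSpace.
Variable N : option nat.
Variable e : nat -> X.
Variable estar : nat -> X -> R.
Hypothesis Hbasis : is_basis X N e.
Hypothesis Hbio : biorthogonal X N e estar.

(** [coord x k] is the [k]-th coordinate of [x], extended by zero off the index range;
    [psum p x] is the [p]-th partial sum of the expansion of [x]. *)
Definition coord (x : X) (k : nat) : R := if inb N k then estar k x else 0.

Definition psum (p : nat) (x : X) : X := comb e (coord x) p.

Lemma coord_in x k : in_len N k -> coord x k = estar k x.
Proof. intros Hk. unfold coord. rewrite (proj2 (inb_spec N k) Hk). reflexivity. Qed.

Lemma coord_zero_out x : zero_out N (coord x).
Proof. intros k Hk. unfold coord. apply inb_false in Hk. rewrite Hk. auto. Qed.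

Lemma psum_S p x : psum (S p) x = vadd (psum p x) (vscal (coord x (S p)) (e (S p))).
Proof. apply comb_S. Qed.

Lemma expands_comb c p :
  zero_out N c -> (forall k, (p < k)%nat -> c k = 0) -> expands X N e c (comb e c p).
Proof.
  intros Hz Hp. destruct N as [n|]; simpl.
  - destruct (le_lt_dec p n).
    + symmetry; apply comb_stable; auto. intros; apply Hp; lia.
    + apply comb_stable; [lia|]. intros k Hk. apply Hz. unfold in_len. lia.
  - intros eps He. exists p. intros q Hq. fold (comb e c q). rewrite (comb_stable e c p q Hq).
    rewrite vsub_diag, vnorm_z; auto. intros; apply Hp; lia.
Qed.

Lemma estar_comb c p k : zero_out N c -> in_len N k ->
  estar k (comb e c p) = if Nat.leb k p then c k else 0.
Proof.
  intros Hz Hk. set (c' := fun i => if Nat.leb i p then c i else 0).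
  assert (comb e c p = comb e c' p) as ->.
  { apply comb_ext. intros i Hi. unfold c'. destruct (Nat.leb_spec i p); auto; lia. }
  apply (Hbio _ c'); auto. apply expands_comb.
  - intros i Hi. unfold c'. rewrite Hz; auto. destruct (Nat.leb i p); auto.
  - intros i Hi. unfold c'. destruct (Nat.leb_spec i p); auto; lia.
Qed.

Lemma estar_e k i : in_len N k -> in_len N i -> estar k (e i) = if Nat.eqb k i then 1 else 0.
Proof.
  intros Hk Hi. rewrite <- (comb_delta e i) by (destruct Hi; auto).
  rewrite estar_comb by (auto; apply delta_zero_out; auto).
  unfold delta. destruct (Nat.eqb_spec k i); subst.
  - rewrite Nat.leb_refl. auto.
  - destruct (Nat.leb k i); auto.
Qed.

Lemma expands_lin x y al be a b :
  expands X N e al x -> expands X N e be y ->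
  expands X N e (fun i => a * al i + b * be i) (vadd (vscal a x) (vscal b y)).
Proof.
  destruct N as [n|]; simpl; intros Hx Hy.
  - fold (comb e al n) in Hx. fold (comb e be n) in Hy.
    fold (comb e (fun i => a * al i + b * be i) n). rewrite comb_lin, Hx, Hy. reflexivity.
  - intros eps He.
    set (d := eps / (2 * (Rabs a + Rabs b + 1))).
    pose proof (Rabs_pos a); pose proof (Rabs_pos b).
    assert (Hd : 0 < d) by (unfold d; apply Rdiv_lt_0_compat; lra).
    destruct (Hx d Hd) as [M1 H1]. destruct (Hy d Hd) as [M2 H2].
    exists (max M1 M2). intros p Hp.
    fold (comb e (fun i => a * al i + b * be i) p). rewrite comb_lin, vsub_add, <- !vscal_sub.
    eapply Rle_lt_trans. apply vnorm_triangle. rewrite !vnorm_scal.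
    specialize (H1 p ltac:(lia)). specialize (H2 p ltac:(lia)).
    fold (comb e al p) in H1. fold (comb e be p) in H2.
    assert (Rabs a * vnorm (vsub (comb e al p) x) <= Rabs a * d) by (apply Rmult_le_compat_l; lra).
    assert (Rabs b * vnorm (vsub (comb e be p) y) <= Rabs b * d) by (apply Rmult_le_compat_l; lra).
    assert ((Rabs a + Rabs b) * d < eps).
    { unfold d. apply (Rmult_lt_reg_r (2 * (Rabs a + Rabs b + 1))). lra.
      field_simplify; try lra. nra. }
    nra.
Qed.

(** The coordinate functionals are linear (uniqueness of expansions). *)
Lemma estar_lin k : in_len N k -> is_linear_fun X (estar k).
Proof.
  intros Hk a b x y. destruct Hbasis as [Hex _].
  destruct (Hex x) as [al Hal]. destruct (Hex y) as [be Hbe].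
  rewrite (Hbio _ _ (expands_lin x y al be a b Hal Hbe) k Hk).
  rewrite (Hbio _ _ Hal k Hk), (Hbio _ _ Hbe k Hk). reflexivity.
Qed.

Lemma coord_lin k : is_linear_fun X (fun x => coord x k).
Proof.
  intros a b x y. unfold coord. destruct (inb N k) eqn:E.
  - apply inb_spec in E. apply (estar_lin k E).
  - ring.
Qed.

Lemma psum_lin p a b x y :
  psum p (vadd (vscal a x) (vscal b y)) = vadd (vscal a (psum p x)) (vscal b (psum p y)).
Proof. unfold psum. rewrite <- comb_lin. apply comb_ext. intros k _. apply coord_lin. Qed.

Lemma psum_add p x y : psum p (vadd x y) = vadd (psum p x) (psum p y).
Proof. rewrite <- (vscal_1 x), <- (vscal_1 y), psum_lin, !vscal_1. reflexivity. Qed.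

Lemma psum_scal p a x : psum p (vscal a x) = vscal a (psum p x).
Proof.
  rewrite <- (vadd_0 (vscal a x)), <- (vscal_0 x) at 1.
  rewrite psum_lin, vscal_0, vadd_0. reflexivity.
Qed.

Lemma psum_sub p x y : psum p (vsub x y) = vsub (psum p x) (psum p y).
Proof. unfold vsub. rewrite psum_add, vopp_scal, psum_scal, <- vopp_scal. reflexivity. Qed.

Lemma psum_zero p : psum p vzero = vzero.
Proof. rewrite <- (vscal_0 vzero), psum_scal, !vscal_0. reflexivity. Qed.

Lemma psum_conv x eps : 0 < eps ->
  exists M, forall p, (M <= p)%nat -> vnorm (vsub (psum p x) x) < eps.
Proof.
  intros He. destruct Hbasis as [Hex _]. destruct (Hex x) as [al Hal].
  assert (Hcoord : forall k, in_len N k -> coord x k = al k)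
    by (intros k Hk; rewrite coord_in by auto; apply (Hbio _ _ Hal); auto).
  destruct N as [n|] eqn:HN.
  - exists n. intros p Hp. unfold psum. rewrite comb_stable with (p := n); auto.
    + simpl in Hal. fold (comb e al n) in Hal.
      rewrite (comb_ext e _ al), <- Hal, vsub_diag, vnorm_z; [exact He|].
      intros k Hk. apply Hcoord. unfold in_len. lia.
    + intros k Hk. apply coord_zero_out. rewrite HN. unfold in_len. lia.
  - destruct (Hal eps He) as [M HM]. exists M. intros p Hp. unfold psum.
    rewrite (comb_ext e _ al). apply HM; auto.
    intros k Hk. apply Hcoord. unfold in_len. split; auto; lia.
Qed.

Lemma e_nonzero k : in_len N k -> 0 < vnorm (e k).
Proof.
  intros Hk. destruct (vnorm_nonneg (e k)) as [H|H]; auto. exfalso.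
  pose proof (estar_e k k Hk Hk) as He. apply eq_sym, vnorm_eq0 in H.
  rewrite Nat.eqb_refl, H, (lin_zero _ (estar_lin k Hk)) in He. lra.
Qed.

Lemma coord_of_limit c z : zero_out N c ->
  (forall eps, 0 < eps -> exists M, forall p, (M <= p)%nat -> vnorm (vsub (comb e c p) z) < eps) ->
  forall k, in_len N k -> estar k z = c k.
Proof.
  intros Hz Hc k Hk. apply (Hbio _ c); auto. destruct N as [n|]; simpl.
  - symmetry. apply vlim_unique. intros eps He. destruct (Hc eps He) as [M HM].
    specialize (HM (max M n) ltac:(lia)). rewrite comb_stable with (p := n) in HM; auto. lia.
    intros i Hi. apply Hz. unfold in_len. lia.
  - exact Hc.
Qed.

Lemma psum_bounded x : exists B, forall p, vnorm (psum p x) <= B.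
Proof.
  destruct (psum_conv x 1 ltac:(lra)) as [M HM].
  set (S0 := gsum 0 Rplus (seq 0 M) (fun p => vnorm (psum p x))).
  exists (vnorm x + 1 + S0). intros p.
  assert (HS0 : 0 <= S0) by (apply rgsum_nonneg; intros; apply vnorm_nonneg).
  pose proof (vnorm_nonneg x). destruct (le_lt_dec M p).
  - specialize (HM p l). pose proof (vnorm_add_sub (psum p x) x). lra.
  - assert (vnorm (psum p x) <= S0).
    { apply (gsum_term_le _ (fun p => vnorm (psum p x))). intros; apply vnorm_nonneg.
      apply in_seq; lia. }
    lra.
Qed.

End Basis.

(** ** The Baire category argument *)

Lemma nested_balls (X : NormedSpace) (HX : complete X) (y : nat -> X) (r : nat -> R) :
  r 0%nat <= 1 -> (forall i, 0 < r i) ->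
  (forall i, vnorm (vsub (y (S i)) (y i)) + 2 * r (S i) <= r i) ->
  exists x, forall i, vnorm (vsub x (y i)) <= r i.
Proof.
  intros Hr0 Hpos Hstep.
  assert (Hr : forall i, r i <= (1/2)^i).
  { intros i; induction i; simpl; [lra|].
    pose proof (Hstep i). pose proof (vnorm_nonneg (vsub (y (S i)) (y i))). lra. }
  assert (Hd : forall i l, (i <= l)%nat -> vnorm (vsub (y l) (y i)) <= r i - r l).
  { intros i l Hil. induction Hil. rewrite vsub_diag, vnorm_z; lra.
    pose proof (Hstep m). pose proof (vnorm_sub_tri (y (S m)) (y m) (y i)).
    pose proof (Hpos (S m)). lra. }
  assert (Hcau : forall ep, 0 < ep -> exists M, forall p q, (M <= p)%nat -> (M <= q)%nat ->
            vnorm (vsub (y p) (y q)) < ep).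
  { intros ep Hep. destruct (half_pow_small (ep/2)) as [i Hi]; [lra|].
    exists i. intros p q Hp Hq. pose proof (Hd i p Hp). pose proof (Hd i q Hq).
    pose proof (vnorm_sub_tri (y p) (y i) (y q)). rewrite (vnorm_sub_sym (y i) (y q)) in H1.
    pose proof (Hpos p). pose proof (Hpos q). pose proof (Hr i). lra. }
  destruct (HX y Hcau) as [x Hx]. exists x. intros i. apply Rnot_lt_le. intros Hlt.
  destruct (Hx (vnorm (vsub x (y i)) - r i) ltac:(lra)) as [M HM].
  specialize (HM (max M i) ltac:(lia)). pose proof (Hd i (max M i) ltac:(lia)).
  pose proof (vnorm_sub_tri x (y (max M i)) (y i)). rewrite vnorm_sub_sym in HM.
  pose proof (Hpos (max M i)). lra.
Qed.

Lemma baire (X : NormedSpace) (HX : complete X) (K : R -> X -> Prop) :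
  (forall M M' z, M <= M' -> K M z -> K M' z) -> (forall x, exists B, K B x) ->
  exists M x0 r, 0 < r /\ forall y, vnorm (vsub y x0) < r -> forall eps, 0 < eps ->
     exists z, K M z /\ vnorm (vsub z y) < eps.
Proof.
  intros Hmono Hcov. apply NNPP. intros Hneg.
  (* otherwise every ball contains a smaller ball at positive distance from [K M] *)
  assert (Hstep : forall (i : nat) (pr : X * R), exists q : X * R, 0 < snd pr ->
     (0 < snd q /\ vnorm (vsub (fst q) (fst pr)) + 2 * snd q <= snd pr /\
      forall z, K (INR i) z -> 2 * snd q <= vnorm (vsub z (fst q)))).
  { intros i [x0 r]. simpl. destruct (Rlt_dec 0 r) as [Hr|Hr]; [|exists (x0, r); simpl; intros; lra].
    assert (exists y, vnorm (vsub y x0) < r /\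
              exists ep, 0 < ep /\ forall z, K (INR i) z -> ep <= vnorm (vsub z y))
      as [y [Hy [ep [Hep Hz]]]].
    { apply NNPP; intros Hc. apply Hneg. exists (INR i), x0, r. split; auto.
      intros y Hy ep Hep. apply NNPP; intros Hz. apply Hc. exists y; split; auto.
      exists ep; split; auto. intros z Kz. apply Rnot_lt_le. intros Hlt. eauto. }
    exists (y, Rmin ep (r - vnorm (vsub y x0)) / 2). simpl. intros _.
    pose proof (Rmin_l ep (r - vnorm (vsub y x0))). pose proof (Rmin_r ep (r - vnorm (vsub y x0))).
    assert (0 < Rmin ep (r - vnorm (vsub y x0))) by (apply Rmin_glb_lt; lra).
    repeat split; try lra. intros z Kz. specialize (Hz z Kz). lra. }
  destruct (choice_fun (vzero, 0) (fun (ip : nat * (X * R)) (q : X * R) => 0 < snd (snd ip) ->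
     (0 < snd q /\ vnorm (vsub (fst q) (fst (snd ip))) + 2 * snd q <= snd (snd ip) /\
      forall z, K (INR (fst ip)) z -> 2 * snd q <= vnorm (vsub z (fst q)))))
    as [f Hf].
  { intros [i pr]. apply Hstep. }
  set (u := iter_seq (vzero, 1) (fun i pr => f (i, pr))).
  assert (Hpos : forall i, 0 < snd (u i)).
  { intros i; induction i. simpl; lra. exact (proj1 (Hf (i, u i) IHi)). }
  destruct (nested_balls X HX (fun i => fst (u i)) (fun i => snd (u i))) as [x Hx];
    [simpl; lra | exact Hpos | intros i; apply (Hf (i, u i) (Hpos i)) |].
  destruct (Hcov x) as [B HB]. destruct (INR_unbounded B) as [i Hi].
  destruct (Hf (i, u i) (Hpos i)) as [HS [_ Hfar]].
  specialize (Hfar x (Hmono B (INR i) x ltac:(lra) HB)).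
  pose proof (Hx (S i)). pose proof (Hpos (S i)). unfold u in *; simpl in *. lra.
Qed.

Lemma cv_of_bounded_oscillation (s d : nat -> R) :
  (forall eps, 0 < eps -> exists L, forall l, (L <= l)%nat -> d l < eps) ->
  (forall l l', (l <= l')%nat -> Rabs (s l' - s l) <= d l) ->
  exists a, Un_cv s a.
Proof.
  intros Hd Hs. destruct (R_complete s) as [a Ha]; [|exists a; exact Ha]. intros eps He.
  destruct (Hd (eps / 3) ltac:(lra)) as [L HL]. specialize (HL L (le_n _)).
  exists L. intros p q Hp Hq. unfold Rdist.
  pose proof (Hs L p Hp). pose proof (Hs L q Hq).
  replace (s p - s q) with ((s p - s L) - (s q - s L)) by ring.
  eapply Rle_lt_trans. apply Rabs_triang. rewrite Rabs_Ropp. lra.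
Qed.

(** ** Uniform boundedness of the partial sum projections *)

Section BasisConstant.
Variable X : NormedSpace.
Hypothesis HX : complete X.
Variable N : option nat.
Variable e : nat -> X.
Variable estar : nat -> X -> R.
Hypothesis Hbasis : is_basis X N e.
Hypothesis Hbio : biorthogonal X N e estar.

Notation psum := (psum X N e estar).
Notation coord := (coord X N estar).

(** By Baire, every [y] is within [|y|/2] of a vector all of whose partial sums have
    norm at most [kappa |y|]. *)
Lemma psum_approx : exists kap, 0 <= kap /\ forall y, exists z,
  (forall p, vnorm (psum p z) <= kap * vnorm y) /\ vnorm (vsub y z) <= vnorm y / 2.
Proof.
  destruct (baire X HX (fun M z => forall p, vnorm (psum p z) <= M)) as [M [x0 [r [Hr Hd]]]].
  { intros M M' z HM Hz p. specialize (Hz p). lra. }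
  { apply psum_bounded; auto. }
  exists (4 * Rabs M / r). pose proof (Rabs_pos M). split.
  { apply Rmult_le_pos; [lra | left; apply Rinv_0_lt_compat; auto]. }
  intros y. destruct (Req_dec (vnorm y) 0) as [Hy0|Hy0].
  { exists vzero. rewrite vsub_0r, Hy0. split; [|lra].
    intros p. rewrite psum_zero, vnorm_z by auto. lra. }
  pose proof (vnorm_nonneg y) as Hyn.
  (* approximate [x0] and [x0 + t y] from [K M], with [|t y| = r/2] *)
  set (t := r / (2 * vnorm y)).
  assert (Ht : 0 < t) by (unfold t; apply Rdiv_lt_0_compat; lra).
  set (ep := vnorm y * t / 4).
  assert (Hep : 0 < ep) by (unfold ep; apply Rdiv_lt_0_compat; [apply Rmult_lt_0_compat|]; lra).
  assert (Hy'n : vnorm (vscal t y) = r / 2).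
  { rewrite vnorm_scal, Rabs_right by lra. unfold t. field. lra. }
  destruct (Hd (vadd x0 (vscal t y)) ltac:(rewrite vsub_add_l; lra) ep Hep) as [z1 [Hz1 Hz1']].
  destruct (Hd x0 ltac:(rewrite vsub_diag, vnorm_z; lra) ep Hep) as [z2 [Hz2 Hz2']].
  assert (Htinv : 0 < / t) by (apply Rinv_0_lt_compat; lra).
  exists (vscal (/ t) (vsub z1 z2)). split.
  - intros p. rewrite psum_scal, vnorm_scal, psum_sub, Rabs_right by (auto; lra).
    pose proof (vnorm_sub_le (psum p z1) (psum p z2)).
    specialize (Hz1 p). specialize (Hz2 p). pose proof (Rle_abs M).
    apply Rle_trans with (/ t * (2 * Rabs M)).
    { apply Rmult_le_compat_l; lra. }
    unfold t. right. field. lra.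
  - assert (vnorm (vsub (vscal t y) (vsub z1 z2)) < 2 * ep).
    { rewrite vnorm_sub_sym, (vsub_regroup z1 z2 x0 (vscal t y)).
      eapply Rle_lt_trans. apply vnorm_sub_le. lra. }
    replace y with (vscal (/ t) (vscal t y)) at 1
      by (rewrite vscal_assoc, Rinv_l, vscal_1 by lra; reflexivity).
    rewrite <- vscal_sub, vnorm_scal, Rabs_right by lra.
    apply Rle_trans with (/ t * (2 * ep)).
    { apply Rmult_le_compat_l; lra. }
    unfold ep. right. field. lra.
Qed.


(** If the partial sums of [Y l] are uniformly Cauchy (with modulus [dl]) and
    [Y l -> y], the partial sums of [y] are the uniform limits of those of [Y l].
    This is the completeness of [X] for the norm [sup_p |psum p x|]. *)
Section UniformLimit.
Variable Y : nat -> X.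
Variable dl : nat -> R.
Variable y : X.
Hypothesis Hdl : forall eps, 0 < eps -> exists L0, forall l, (L0 <= l)%nat -> dl l < eps.
Hypothesis HU : forall l l' p, (l <= l')%nat ->
  vnorm (vsub (psum p (Y l')) (psum p (Y l))) <= dl l.
Hypothesis HY : forall eps, 0 < eps -> exists L, forall l, (L <= l)%nat -> vnorm (vsub (Y l) y) < eps.

Lemma coord_oscillation l l' k : (l <= l')%nat -> in_len N k ->
  Rabs (coord (Y l') k - coord (Y l) k) <= 2 * dl l / vnorm (e k).
Proof.
  intros Hll' Hk. destruct k as [|k]; [destruct Hk; lia|].
  pose proof (e_nonzero X N e estar Hbasis Hbio (S k) Hk) as Hek.
  set (D := vsub (Y l') (Y l)).
  assert (Hc : coord D (S k) = coord (Y l') (S k) - coord (Y l) (S k))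
    by (apply (lin_sub _ (coord_lin X N e estar Hbasis Hbio (S k)))).
  (* the [k+1]-th term of the expansion is a difference of two partial sums *)
  assert (Hterm : vscal (coord D (S k)) (e (S k)) = vsub (psum (S k) D) (psum k D))
    by (rewrite psum_S, vsub_add_l; reflexivity).
  apply (Rmult_le_reg_r (vnorm (e (S k)))); auto.
  replace (2 * dl l / vnorm (e (S k)) * vnorm (e (S k))) with (2 * dl l) by (field; lra).
  rewrite <- Hc, <- vnorm_scal, Hterm.
  eapply Rle_trans. apply vnorm_sub_le. unfold D. rewrite !psum_sub by auto.
  pose proof (HU l l' (S k) Hll'). pose proof (HU l l' k Hll'). lra.
Qed.

Lemma coord_limits : exists a, zero_out N a /\ forall k, Un_cv (fun l => coord (Y l) k) (a k).
Proof.
  assert (Hlim : forall k, exists a, Un_cv (fun l => coord (Y l) k) a).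
  { intros k. destruct (classic (in_len N k)) as [Hk|Hk].
    - pose proof (e_nonzero X N e estar Hbasis Hbio k Hk) as Hek.
      apply (cv_of_bounded_oscillation _ (fun l => 2 * dl l / vnorm (e k))).
      + intros eps He. destruct (Hdl (eps * vnorm (e k) / 2)) as [L HL].
        { apply Rdiv_lt_0_compat; [apply Rmult_lt_0_compat|]; lra. }
        exists L. intros l Hl. specialize (HL l Hl).
        apply (Rmult_lt_reg_r (vnorm (e k))); auto. field_simplify; lra.
      + intros l l' Hll'. apply coord_oscillation; auto.
    - exists 0. intros eps He. exists 0%nat. intros l _. unfold Rdist.
      rewrite (coord_zero_out X N estar) by auto. rewrite Rminus_0_r, Rabs_R0. lra. }
  destruct (choice_fun 0 _ Hlim) as [a Ha]. exists a. split; auto.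
  intros k Hk. apply (UL_sequence (fun l => coord (Y l) k)); auto.
  intros eps He. exists 0%nat. intros l _. unfold Rdist.
  rewrite (coord_zero_out X N estar) by auto. rewrite Rminus_0_r, Rabs_R0. lra.
Qed.

Lemma psum_to_limit_coeffs a : (forall k, Un_cv (fun l => coord (Y l) k) (a k)) ->
  forall l p, vnorm (vsub (psum p (Y l)) (comb e a p)) <= dl l.
Proof.
  intros Ha l p. apply Rle_plus_epsilon. intros eta Heta.
  destruct (comb_conv e (fun l => coord (Y l)) a Ha p eta Heta) as [L HL].
  pose proof (HL (max L l) ltac:(lia)). pose proof (HU l (max L l) p ltac:(lia)).
  pose proof (vnorm_sub_tri (psum p (Y l)) (psum p (Y (max L l))) (comb e a p)).
  rewrite vnorm_sub_sym in H0. unfold psum in *. lra.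
Qed.

Lemma psum_uniform_limit l p : vnorm (vsub (psum p y) (psum p (Y l))) <= dl l.
Proof.
  destruct coord_limits as [a [Hza Ha]].
  set (T := comb e a).
  pose proof (psum_to_limit_coeffs a Ha) as HdT. fold T in HdT.
  (* hence [T] is Cauchy and has a limit [w], which is also the limit of [Y] *)
  assert (HTc : forall eps, 0 < eps -> exists M, forall p q, (M <= p)%nat -> (M <= q)%nat ->
            vnorm (vsub (T p) (T q)) < eps).
  { intros eps He. destruct (Hdl (eps/4) ltac:(lra)) as [l0 Hl]. specialize (Hl l0 (le_n _)).
    destruct (psum_conv X N e estar Hbasis Hbio (Y l0) (eps/4) ltac:(lra)) as [M HM].
    exists M. intros p0 q Hp Hq.
    pose proof (HdT l0 p0). pose proof (HdT l0 q). pose proof (HM p0 Hp). pose proof (HM q Hq).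
    pose proof (vnorm_sub_tri (T p0) (psum p0 (Y l0)) (T q)).
    pose proof (vnorm_sub_tri (psum p0 (Y l0)) (Y l0) (T q)).
    pose proof (vnorm_sub_tri (Y l0) (psum q (Y l0)) (T q)).
    pose proof (vnorm_sub_sym (T p0) (psum p0 (Y l0))).
    pose proof (vnorm_sub_sym (Y l0) (psum q (Y l0))). lra. }
  destruct (HX T HTc) as [w Hw].
  assert (HYw : forall l, vnorm (vsub (Y l) w) <= dl l).
  { intros l0. apply Rle_plus_epsilon. intros eta Heta.
    destruct (psum_conv X N e estar Hbasis Hbio (Y l0) (eta/2) ltac:(lra)) as [M1 HM1].
    destruct (Hw (eta/2) ltac:(lra)) as [M2 HM2].
    pose proof (HM1 (max M1 M2) ltac:(lia)). pose proof (HM2 (max M1 M2) ltac:(lia)).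
    pose proof (HdT l0 (max M1 M2)).
    pose proof (vnorm_sub_tri (Y l0) (psum (max M1 M2) (Y l0)) w).
    pose proof (vnorm_sub_tri (psum (max M1 M2) (Y l0)) (T (max M1 M2)) w).
    rewrite vnorm_sub_sym in H. lra. }
  assert (y = w) as <-.
  { apply vlim_unique. intros eps He. destruct (Hdl (eps/2) ltac:(lra)) as [l1 Hl1].
    destruct (HY (eps/2) ltac:(lra)) as [L HL].
    specialize (Hl1 (max l1 L) ltac:(lia)). specialize (HL (max l1 L) ltac:(lia)).
    pose proof (HYw (max l1 L)). pose proof (vnorm_sub_tri y (Y (max l1 L)) w).
    rewrite vnorm_sub_sym in HL. lra. }
  (* the coordinates of [y] are the limits [a], so [psum p y = T p] *)
  assert (HSy : psum p y = T p).
  { unfold psum, T. apply comb_ext. intros k Hk. unfold coord.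
    destruct (inb N k) eqn:E.
    - apply inb_spec in E. apply (coord_of_limit X N e estar Hbasis Hbio a y Hza Hw k E).
    - symmetry; apply Hza. apply inb_false; auto. }
  rewrite HSy, vnorm_sub_sym. apply HdT.
Qed.

End UniformLimit.

Lemma psum_uniform : exists C, 0 <= C /\ forall y p, vnorm (psum p y) <= C * vnorm y.
Proof.
  destruct psum_approx as [kap [Hk Hd]].
  destruct (choice_fun vzero _ Hd) as [g Hg].
  exists (2 * kap). split; [lra|]. intros y p.
  pose proof (vnorm_nonneg y) as Hy.
  (* remainders of the successive approximations [y = g R0 + g R1 + ... + R l] *)
  set (Rs := iter_seq y (fun _ R => vsub R (g R))).
  assert (HR : forall i, vnorm (Rs i) <= vnorm y * (1/2)^i).
  { intros i; induction i. unfold Rs; simpl; lra.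
    change (Rs (S i)) with (vsub (Rs i) (g (Rs i))). destruct (Hg (Rs i)) as [_ H].
    replace (vnorm y * (1/2)^(S i)) with ((vnorm y * (1/2)^i) / 2) by (simpl; field). lra. }
  assert (HUa : forall l l' p, (l <= l')%nat ->
     vnorm (psum p (vsub (Rs l) (Rs l'))) <= 2 * kap * vnorm y * ((1/2)^l - (1/2)^l')).
  { intros l l' q Hll'. induction Hll'.
    - rewrite vsub_diag, psum_zero, vnorm_z by auto. lra.
    - change (Rs (S m)) with (vsub (Rs m) (g (Rs m))).
      rewrite vsub_sub_r, psum_add by auto. eapply Rle_trans. apply vnorm_triangle.
      destruct (Hg (Rs m)) as [H1 _]. specialize (H1 q). specialize (HR m).
      assert (kap * vnorm (Rs m) <= kap * (vnorm y * (1/2)^m)) by (apply Rmult_le_compat_l; auto).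
      simpl. lra. }
  set (Y := fun l => vsub y (Rs l)).
  set (dl := fun l => 2 * kap * vnorm y * (1/2)^l).
  assert (Hdl : forall eps, 0 < eps -> exists L0, forall l, (L0 <= l)%nat -> dl l < eps).
  { apply geometric_small. apply Rmult_le_pos; lra. }
  assert (HU : forall l l' p, (l <= l')%nat ->
                 vnorm (vsub (psum p (Y l')) (psum p (Y l))) <= dl l).
  { intros l l' q Hll'. unfold Y. rewrite <- psum_sub, vsub_sub_l by auto.
    eapply Rle_trans. apply HUa; auto. unfold dl.
    assert (0 <= (1/2)^l') by (apply pow_le; lra).
    assert (0 <= 2 * kap * vnorm y) by (apply Rmult_le_pos; lra). nra. }
  assert (HY : forall eps, 0 < eps -> exists L, forall l, (L <= l)%nat ->
                 vnorm (vsub (Y l) y) < eps).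
  { intros eps He. destruct (geometric_small (vnorm y) Hy eps He) as [L HL].
    exists L. intros l Hl. unfold Y. rewrite vnorm_sub_sym, vsub_sub_r, vsub_diag, vadd_0l.
    specialize (HR l). specialize (HL l Hl). lra. }
  pose proof (psum_uniform_limit Y dl y Hdl HU HY 0%nat p) as Hlim.
  unfold Y, dl in Hlim. simpl in Hlim. unfold Rs in Hlim; simpl in Hlim.
  rewrite vsub_diag, psum_zero, vsub_0r in Hlim by auto. lra.
Qed.

Lemma estar_bounded k : in_len N k -> exists C, forall x, Rabs (estar k x) <= C * vnorm x.
Proof.
  intros Hk. destruct psum_uniform as [C [HC HS]].
  pose proof (e_nonzero X N e estar Hbasis Hbio k Hk) as Hek.
  exists (2 * C / vnorm (e k)). intros x.
  destruct k as [|k]; [destruct Hk; lia|].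
  assert (Hterm : vscal (estar (S k) x) (e (S k)) = vsub (psum (S k) x) (psum k x)).
  { rewrite psum_S, vsub_add_l, coord_in by auto. reflexivity. }
  pose proof (vnorm_sub_le (psum (S k) x) (psum k x)).
  rewrite <- Hterm, vnorm_scal in H. pose proof (HS x (S k)). pose proof (HS x k).
  apply (Rmult_le_reg_r (vnorm (e (S k)))); auto.
  replace (2 * C / vnorm (e (S k)) * vnorm x * vnorm (e (S k))) with (2 * C * vnorm x)
    by (field; lra).
  lra.
Qed.

End BasisConstant.

(** ** Hahn-Banach in finite dimension *)

Lemma convex_subgradient (h : R -> R) (sg : R) :
  (forall s1 s2 lam, 0 <= lam <= 1 ->
     h (lam * s1 + (1 - lam) * s2) <= lam * h s1 + (1 - lam) * h s2) ->
  exists gam, forall s, h sg + (s - sg) * gam <= h s.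
Proof.
  intros Hconv.
  (* slopes of chords to the left of [sg] are below slopes of chords to the right *)
  assert (Hslope : forall s1 s2, s1 < sg -> sg < s2 ->
            (h sg - h s1) / (sg - s1) <= (h s2 - h sg) / (s2 - sg)).
  { intros s1 s2 H1 H2.
    set (lam := (s2 - sg) / (s2 - s1)).
    assert (Hl : 0 <= lam <= 1).
    { unfold lam. split. apply Rmult_le_pos; [lra | left; apply Rinv_0_lt_compat; lra].
      apply (Rmult_le_reg_r (s2 - s1)); [lra|]. field_simplify; lra. }
    pose proof (Hconv s1 s2 lam Hl) as H.
    replace (lam * s1 + (1 - lam) * s2) with sg in H by (unfold lam; field; lra).
    apply (Rmult_le_compat_r (s2 - s1)) in H; [|lra].
    replace ((lam * h s1 + (1 - lam) * h s2) * (s2 - s1)) with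
      ((s2 - sg) * h s1 + (sg - s1) * h s2) in H by (unfold lam; field; lra).
    apply (Rmult_le_reg_r ((sg - s1) * (s2 - sg))). apply Rmult_lt_0_compat; lra.
    replace ((h sg - h s1) / (sg - s1) * ((sg - s1) * (s2 - sg))) with
      ((h sg - h s1) * (s2 - sg)) by (field; lra).
    replace ((h s2 - h sg) / (s2 - sg) * ((sg - s1) * (s2 - sg))) with
      ((h s2 - h sg) * (sg - s1)) by (field; lra).
    nra. }
  (* take the supremum of the left slopes *)
  set (E := fun r => exists s, s < sg /\ r = (h sg - h s) / (sg - s)).
  assert (HEne : exists x, E x) by (eexists; exists (sg - 1); split; [lra|reflexivity]).
  assert (HEb : forall r, E r -> r <= (h (sg + 1) - h sg) / (sg + 1 - sg)).
  { intros r [s [Hs ->]]. apply Hslope; lra. }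
  exists (Rsup E). intros s. destruct (Rtotal_order s sg) as [Hs|[Hs|Hs]].
  - assert ((h sg - h s) / (sg - s) <= Rsup E) as H.
    { eapply Rsup_ub; [exact HEb|]. exists s; auto. }
    apply (Rmult_le_compat_r (sg - s)) in H; [|lra].
    replace ((h sg - h s) / (sg - s) * (sg - s)) with (h sg - h s) in H by (field; lra). nra.
  - subst. lra.
  - assert (Rsup E <= (h s - h sg) / (s - sg)) as H.
    { apply Rsup_le; auto. intros r [s1 [Hs1 ->]]. apply Hslope; lra. }
    apply (Rmult_le_compat_r (s - sg)) in H; [|lra].
    replace ((h s - h sg) / (s - sg) * (s - sg)) with (h s - h sg) in H by (field; lra). nra.
Qed.

(** Vectors of [R^L] are represented by sequences [nat -> R], of which only the
    coordinates [1..L] matter. *)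
Definition dotL (L : nat) (c a : nat -> R) : R := gsum 0 Rplus (seq 1 L) (fun k => c k * a k).
Definition padd (a b : nat -> R) : nat -> R := fun k => a k + b k.
Definition pscal (s : R) (a : nat -> R) : nat -> R := fun k => s * a k.
Definition trunc (L : nat) (a : nat -> R) : nat -> R :=
  fun k => if (Nat.leb 1 k && Nat.leb k L)%bool then a k else 0.

Definition sublin (p : (nat -> R) -> R) : Prop :=
  (forall a b, p (padd a b) <= p a + p b) /\ (forall t a, 0 <= t -> p (pscal t a) = t * p a).
Definition depL (L : nat) (p : (nat -> R) -> R) : Prop :=
  forall a b, (forall k, (1 <= k <= L)%nat -> a k = b k) -> p a = p b.

Lemma sublin_zero p : sublin p -> p (fun _ => 0) = 0.
Proof.
  intros [_ H]. pose proof (H 0 (fun _ => 0) (Rle_refl 0)) as H0. unfold pscal in H0.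
  replace (fun _ : nat => 0 * 0) with (fun _ : nat => 0) in H0
    by (apply functional_extensionality; intros; ring).
  lra.
Qed.

Lemma dotL_S L c a : dotL (S L) c a = dotL L c a + c (S L) * a (S L).
Proof. unfold dotL. rewrite seq_S, rgsum_app. simpl. ring. Qed.

Lemma dotL_ext L c c' a :
  (forall k, (1 <= k <= L)%nat -> c k = c' k) -> dotL L c a = dotL L c' a.
Proof.
  intros H. unfold dotL. apply gsum_ext. intros i Hi. apply in_seq in Hi. rewrite H by lia. auto.
Qed.

(** The reduction step: given a sublinear [p] on [R^(L+1)] and a slope [gam] on the
    last axis dominated by [p], the functional
    [p' a = inf_s (p (trunc L a + s e_(L+1)) - s gam)] is sublinear on [R^L]. *)
Section ReductionStep.
Variable L : nat.
Variable p : (nat -> R) -> R.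
Variable gam : R.
Hypothesis Hp : sublin p.
Let t := delta (S L).
Hypothesis Hgam : forall s, s * gam <= p (pscal s t).

Let lift (a : nat -> R) (s : R) : nat -> R := padd (trunc L a) (pscal s t).
Let Fa (a : nat -> R) (r : R) : Prop := exists s, r = - (p (lift a s) - s * gam).
Definition reduced (a : nat -> R) : R := - Rsup (Fa a).

Lemma lift_lower a s : - p (pscal (-1) (trunc L a)) <= p (lift a s) - s * gam.
Proof.
  destruct Hp as [Hsub _]. pose proof (Hgam s).
  assert (p (pscal s t) <= p (lift a s) + p (pscal (-1) (trunc L a))).
  { replace (pscal s t) with (padd (lift a s) (pscal (-1) (trunc L a))) at 1.
    apply Hsub. apply functional_extensionality; intros k. unfold lift, padd, pscal. ring. }
  lra.
Qed.

Let Fa_ne a : exists x, Fa a x.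
Proof. eexists. exists 0. reflexivity. Qed.

Let Fa_bounded a r : Fa a r -> r <= p (pscal (-1) (trunc L a)).
Proof. intros [s ->]. pose proof (lift_lower a s). lra. Qed.

Lemma reduced_le a s : reduced a <= p (lift a s) - s * gam.
Proof.
  unfold reduced. assert (- (p (lift a s) - s * gam) <= Rsup (Fa a)); [|lra].
  eapply Rsup_ub; [apply Fa_bounded|]. exists s; auto.
Qed.

Lemma reduced_approx a eps : 0 < eps -> exists s, p (lift a s) - s * gam < reduced a + eps.
Proof.
  intros He. destruct (Rsup_approx (Fa a) _ eps (Fa_ne a) (Fa_bounded a) He) as [x [[s ->] Hx]].
  exists s. unfold reduced. lra.
Qed.

Lemma reduced_ge a m : (forall s, m <= p (lift a s) - s * gam) -> m <= reduced a.
Proof.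
  intros Hm. unfold reduced. assert (Rsup (Fa a) <= - m); [|lra].
  apply Rsup_le; [apply Fa_ne|]. intros r [s ->]. specialize (Hm s). lra.
Qed.

Let lift_padd a b s1 s2 : lift (padd a b) (s1 + s2) = padd (lift a s1) (lift b s2).
Proof.
  apply functional_extensionality; intros k. unfold lift, padd, pscal, trunc.
  destruct (Nat.leb 1 k && Nat.leb k L)%bool; ring.
Qed.

Let lift_pscal a s0 s : s0 <> 0 -> lift (pscal s0 a) s = pscal s0 (lift a (s / s0)).
Proof.
  intros Hs0. apply functional_extensionality; intros k. unfold lift, padd, pscal, trunc.
  destruct (Nat.leb 1 k && Nat.leb k L)%bool; field; auto.
Qed.

Let lift_zero a s : lift (pscal 0 a) s = pscal s t.
Proof.
  apply functional_extensionality; intros k. unfold lift, padd, pscal, trunc.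
  destruct (Nat.leb 1 k && Nat.leb k L)%bool; ring.
Qed.

Lemma reduced_sublin : sublin reduced.
Proof.
  destruct Hp as [Hsub Hhom]. split.
  - intros a b. apply Rle_plus_epsilon. intros eps He.
    destruct (reduced_approx a (eps/2) ltac:(lra)) as [s1 H1].
    destruct (reduced_approx b (eps/2) ltac:(lra)) as [s2 H2].
    pose proof (reduced_le (padd a b) (s1 + s2)) as H. rewrite lift_padd in H.
    pose proof (Hsub (lift a s1) (lift b s2)). lra.
  - intros s0 a [Hs0|<-]; [apply Rle_antisym; apply Rle_plus_epsilon; intros eps He|].
    + destruct (reduced_approx a (eps / s0) ltac:(apply Rdiv_lt_0_compat; lra)) as [s Hs].
      pose proof (reduced_le (pscal s0 a) (s0 * s)) as H.
      rewrite lift_pscal, Hhom in H by lra.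
      replace (s0 * s / s0) with s in H by (field; lra).
      apply (Rmult_lt_compat_l s0) in Hs; auto.
      replace (s0 * (reduced a + eps / s0)) with (s0 * reduced a + eps) in Hs by (field; lra).
      nra.
    + destruct (reduced_approx (pscal s0 a) eps He) as [s Hs].
      pose proof (reduced_le a (s / s0)) as H.
      rewrite lift_pscal, Hhom in Hs by lra.
      apply (Rmult_le_compat_l s0) in H; [|lra].
      replace (s0 * (p (lift a (s / s0)) - s / s0 * gam)) with
        (s0 * p (lift a (s / s0)) - s * gam) in H by (field; lra).
      lra.
    + rewrite Rmult_0_l. apply Rle_antisym.
      * pose proof (reduced_le (pscal 0 a) 0) as H.
        rewrite lift_zero, Hhom in H by lra. lra.
      * apply reduced_ge. intros s. rewrite lift_zero. pose proof (Hgam s). lra.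
Qed.

Lemma reduced_depL : depL L reduced.
Proof.
  intros a b Hab. unfold reduced. f_equal. apply Rsup_ext. intros r. unfold Fa, lift.
  assert (trunc L a = trunc L b) as ->; [|tauto].
  apply functional_extensionality; intros k. unfold trunc.
  destruct (Nat.leb_spec 1 k); destruct (Nat.leb_spec k L); simpl; auto; apply Hab; lia.
Qed.

Lemma p_lift (Hd : depL (S L) p) a : p a = p (lift a (a (S L))).
Proof.
  apply Hd. intros k Hk. unfold lift, padd, pscal, trunc, t, delta.
  destruct (Nat.eqb_spec k (S L)).
  - subst. destruct (Nat.leb_spec (S L) L); [lia|]. rewrite Bool.andb_false_r. ring.
  - destruct (Nat.leb_spec 1 k); [|lia]. destruct (Nat.leb_spec k L); [|lia]. simpl. ring.
Qed.

End ReductionStep.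

Lemma sublin_line_subgradient p b t s0 : sublin p -> exists gam,
  (forall s, p (padd b (pscal s0 t)) + (s - s0) * gam <= p (padd b (pscal s t))) /\
  (forall s, s * gam <= p (pscal s t)).
Proof.
  intros [Hsub Hhom]. set (h := fun s => p (padd b (pscal s t))).
  destruct (convex_subgradient h s0) as [gam Hgam].
  { intros s1 s2 lam Hl. unfold h.
    replace (padd b (pscal (lam * s1 + (1 - lam) * s2) t)) with
      (padd (pscal lam (padd b (pscal s1 t))) (pscal (1 - lam) (padd b (pscal s2 t)))).
    2:{ apply functional_extensionality; intros k. unfold padd, pscal. ring. }
    eapply Rle_trans. apply Hsub. rewrite !Hhom by lra. lra. }
  exists gam. split; [exact Hgam|].
  assert (Hshift : forall s, h (s0 + s) <= h s0 + p (pscal s t)).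
  { intros s. unfold h. replace (padd b (pscal (s0 + s) t)) with (padd (padd b (pscal s0 t)) (pscal s t)).
    apply Hsub. apply functional_extensionality; intros k. unfold padd, pscal. ring. }
  intros s. destruct (Rle_dec 0 s).
  - pose proof (Hgam (s0 + 1)). pose proof (Hshift 1).
    rewrite Hhom by auto. replace (pscal 1 t) with t in *
      by (apply functional_extensionality; intros; unfold pscal; ring).
    apply Rmult_le_compat_l; auto. lra.
  - pose proof (Hgam (s0 - 1)). pose proof (Hshift (-1)).
    replace (s0 + -1) with (s0 - 1) in * by ring.
    replace (pscal s t) with (pscal (-s) (pscal (-1) t))
      by (apply functional_extensionality; intros k; unfold pscal; ring).
    rewrite Hhom by lra. nra.
Qed.

Theorem hahn_banach_fin : forall L p, sublin p -> depL L p -> forall a0,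
  exists c, (forall a, dotL L c a <= p a) /\ dotL L c a0 = p a0.
Proof.
  induction L as [|L IH]; intros p Hp Hd a0.
  - assert (Hz : forall a, p a = 0).
    { intros a. rewrite (Hd a (fun _ => 0)) by lia. apply sublin_zero; auto. }
    exists (fun _ => 0). unfold dotL. simpl. split; [intros a; rewrite Hz; lra | rewrite Hz; auto].
  - set (t := delta (S L)).
    destruct (sublin_line_subgradient p (trunc L a0) t (a0 (S L)) Hp) as [gam [Hgam Hline]].
    destruct (IH (reduced L p gam) (reduced_sublin L p gam Hp Hline)
                (reduced_depL L p gam) a0) as [c' [Hc1 Hc2]].
    set (c := fun k => if Nat.eqb k (S L) then gam else c' k).
    assert (Hdot : forall a, dotL (S L) c a = dotL L c' a + gam * a (S L)).
    { intros a. unfold c. rewrite dotL_S, Nat.eqb_refl. f_equal. apply dotL_ext. intros k Hk.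
      destruct (Nat.eqb_spec k (S L)); auto; lia. }
    exists c. split.
    + intros a. rewrite Hdot, (p_lift L p Hd a).
      pose proof (Hc1 a). pose proof (reduced_le L p gam Hp Hline a (a (S L))). lra.
    + rewrite Hdot, Hc2, (p_lift L p Hd a0).
      assert (reduced L p gam a0 = p (padd (trunc L a0) (pscal (a0 (S L)) t)) - a0 (S L) * gam)
        as ->; [|unfold t; ring].
      apply Rle_antisym.
      * apply reduced_le; auto.
      * apply reduced_ge; auto. intros s. pose proof (Hgam s). unfold t in *. lra.
Qed.

(** For linear functionals [f_1..f_L] on [X] with [v |-> (f_k v)_k] onto [R^L], the
    quotient norm [q a = inf { |v| : f v = a }] is sublinear; Hahn-Banach yields a
    combination of the [f_k] of dual norm at most 1 attaining [q] at a given point. *)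
Section QuotientNorm.
Variable X : NormedSpace.
Variable L : nat.
Variable f : nat -> X -> R.
Hypothesis Hlin : forall k, (1 <= k <= L)%nat -> is_linear_fun X (f k).
Hypothesis Hsurj : forall a : nat -> R, exists v, forall k, (1 <= k <= L)%nat -> f k v = a k.

Let fiber (a : nat -> R) (v : X) : Prop := forall k, (1 <= k <= L)%nat -> f k v = a k.
Let fiber_norms (a : nat -> R) (r : R) : Prop := exists v, fiber a v /\ r = - vnorm v.
Definition qnorm (a : nat -> R) : R := - Rsup (fiber_norms a).

Let fiber_norms_ne a : exists r, fiber_norms a r.
Proof. destruct (Hsurj a) as [v Hv]. exists (- vnorm v), v. auto. Qed.

Let fiber_norms_bounded a r : fiber_norms a r -> r <= 0.
Proof. intros [v [_ ->]]. pose proof (vnorm_nonneg v). lra. Qed.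

Lemma qnorm_le a v : fiber a v -> qnorm a <= vnorm v.
Proof.
  intros Hv. unfold qnorm.
  assert (- vnorm v <= Rsup (fiber_norms a)) by (eapply Rsup_ub; [apply fiber_norms_bounded|]; exists v; auto).
  lra.
Qed.

Lemma qnorm_approx a eta : 0 < eta -> exists v, fiber a v /\ vnorm v < qnorm a + eta.
Proof.
  intros He. destruct (Rsup_approx (fiber_norms a) 0 eta (fiber_norms_ne a) (fiber_norms_bounded a) He)
    as [r [[v [Hv ->]] Hr]].
  exists v. split; auto. unfold qnorm. lra.
Qed.

Lemma qnorm_ge a M : (forall v, fiber a v -> M <= vnorm v) -> M <= qnorm a.
Proof.
  intros HM. unfold qnorm. assert (Rsup (fiber_norms a) <= - M); [|lra].
  apply Rsup_le; auto. intros r [v [Hv ->]]. specialize (HM v Hv). lra.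
Qed.

Lemma qnorm_sublin : sublin qnorm.
Proof.
  split.
  - intros a b. apply Rle_plus_epsilon. intros eta He.
    destruct (qnorm_approx a (eta/2) ltac:(lra)) as [va [Hva Hva']].
    destruct (qnorm_approx b (eta/2) ltac:(lra)) as [vb [Hvb Hvb']].
    assert (qnorm (padd a b) <= vnorm (vadd va vb)).
    { apply qnorm_le. intros k Hk. rewrite (lin_add _ (Hlin k Hk)), Hva, Hvb by auto.
      reflexivity. }
    pose proof (vnorm_triangle va vb). lra.
  - intros t a [Ht|<-].
    + apply Rle_antisym.
      * apply Rle_plus_epsilon. intros eta He.
        destruct (qnorm_approx a (eta / t) ltac:(apply Rdiv_lt_0_compat; lra)) as [v [Hv Hv']].
        assert (qnorm (pscal t a) <= vnorm (vscal t v)) as H.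
        { apply qnorm_le. intros k Hk. rewrite (lin_scal _ (Hlin k Hk)), Hv by auto.
          reflexivity. }
        rewrite vnorm_scal, Rabs_right in H by lra.
        apply (Rmult_lt_compat_l t) in Hv'; auto.
        replace (t * (qnorm a + eta / t)) with (t * qnorm a + eta) in Hv' by (field; lra). lra.
      * apply qnorm_ge. intros v Hv.
        assert (qnorm a <= vnorm (vscal (/ t) v)) as H.
        { apply qnorm_le. intros k Hk. rewrite (lin_scal _ (Hlin k Hk)), Hv by auto.
          unfold pscal. field. lra. }
        rewrite vnorm_scal, Rabs_right in H by (left; apply Rinv_0_lt_compat; lra).
        apply (Rmult_le_compat_l t) in H; [|lra].
        rewrite <- Rmult_assoc, Rinv_r, Rmult_1_l in H by lra. lra.
    + rewrite Rmult_0_l. apply Rle_antisym.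
      * apply Rle_trans with (vnorm (@vzero X)); [apply qnorm_le | rewrite vnorm_z; lra].
        intros k Hk. rewrite (lin_zero _ (Hlin k Hk)). unfold pscal. ring.
      * apply qnorm_ge. intros; apply vnorm_nonneg.
Qed.

Lemma qnorm_depL : depL L qnorm.
Proof.
  intros a b Hab. unfold qnorm. f_equal. apply Rsup_ext. intros r. unfold fiber_norms, fiber.
  split; intros [v [Hv ->]]; exists v; split; auto;
    intros k Hk; rewrite Hv by auto; [|symmetry]; apply Hab; auto.
Qed.

Lemma quotient_norming W : exists c,
  (forall v, dotL L c (fun k => f k v) <= vnorm v) /\
  (forall eta, 0 < eta -> exists z, (forall k, (1 <= k <= L)%nat -> f k z = f k W) /\
      vnorm z < dotL L c (fun k => f k W) + eta).
Proof.
  destruct (hahn_banach_fin L qnorm qnorm_sublin qnorm_depL (fun k => f k W)) as [c [Hc1 Hc2]].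
  exists c. split.
  - intros v. eapply Rle_trans. apply Hc1. apply qnorm_le. intros k Hk. reflexivity.
  - intros eta He. rewrite Hc2. apply qnorm_approx; auto.
Qed.

End QuotientNorm.

Definition block {X : NormedSpace} (e : nat -> X) (c : nat -> R) (a b : nat) : X :=
  gsum vzero vadd (seq (a + 1) (b - a - 1)) (fun i => vscal (c i) (e i)).

(** The form of skipped unconditionality actually used: for blocks of a single
    coefficient sequence, cut at [0 = G_0 < G_1 < ... < G_r] with gaps [>= 2] and with
    [G_1 > m1] (so the first block contains all of [e_1, ..., e_(m1)]). *)
Definition skipped_beyond (X : NormedSpace) (N : option nat) (e : nat -> X) (m1 : nat)
  (lam : R) : Prop :=
  forall r (G : nat -> nat) (c : nat -> R) (eps : nat -> R),
    G 0%nat = 0%nat -> (forall j, (1 <= j <= r)%nat -> (G (j - 1) + 2 <= G j)%nat) ->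
    ((1 <= r)%nat -> (m1 < G 1%nat)%nat) -> zero_out N c ->
    (forall j, (1 <= j <= r)%nat -> eps j = 1 \/ eps j = -1) ->
    vnorm (gsum vzero vadd (seq 1 r) (fun j => vscal (eps j) (block e c (G (j - 1)%nat) (G j)))) <=
    lam * vnorm (gsum vzero vadd (seq 1 r) (fun j => block e c (G (j - 1)%nat) (G j))).

Lemma cuts_above_first (G : nat -> nat) r :
  (forall j, (1 <= j <= r)%nat -> (G (j - 1) + 2 <= G j)%nat) ->
  forall j, (1 <= j <= r)%nat -> (G 1%nat <= G j)%nat.
Proof.
  intros Hstep j [Hj1 Hj2]. induction Hj1. lia.
  pose proof (Hstep (S m) ltac:(lia)). simpl in H. replace (m - 0)%nat with m in H by lia.
  specialize (IHHj1 ltac:(lia)). lia.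
Qed.

Lemma skipped_beyond_of_uncond (X : NormedSpace) N (e : nat -> X) m1 lam :
  skipped_uncond_X X N e lam -> skipped_beyond X N e m1 lam.
Proof.
  intros H r G c eps HG0 Hstep _ Hz Heps.
  apply (H r G (fun j => block e c (G (j - 1)%nat) (G j)) eps HG0 Hstep); auto.
  intros j Hj. exists c. split; auto.
Qed.

Lemma shifted_block (X : NormedSpace) (e : nat -> X) m1 (x : X) (c : nat -> R) a b :
  (1 <= m1)%nat -> (m1 <= a)%nat -> (a < b)%nat ->
  block e c a b =
  block (shifted_seq X e m1 x) (fun k => c (m1 + k - 1)%nat) (a - m1 + 1) (b - m1 + 1).
Proof.
  intros Hm1 Ha Hab. unfold block.
  replace (b - m1 + 1 - (a - m1 + 1) - 1)%nat with (b - a - 1)%nat by lia.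
  replace (a + 1)%nat with ((a - m1 + 1 + 1) + (m1 - 1))%nat at 1 by lia.
  rewrite <- gsum_shift. apply gsum_ext. intros k Hk. apply in_seq in Hk. unfold shifted_seq.
  destruct (Nat.eqb_spec k 1); [lia|].
  replace (m1 + k - 1)%nat with (k + (m1 - 1))%nat by lia. auto.
Qed.

(** The hypothesis on the shifted sequences gives it: the part of the first block
    up to [m1] is absorbed in the vector [x]. *)
Lemma skipped_beyond_of_shifted (X : NormedSpace) N (e : nat -> X) m1 lam :
  (1 <= m1)%nat -> lt_len m1 N ->
  (forall x : X, block_span vzero vadd vscal N e 1 m1 x ->
      skipped_uncond_X X (shifted_len N m1) (shifted_seq X e m1 x) lam) ->
  skipped_beyond X N e m1 lam.
Proof.
  intros Hm1 HmN H r G c eps HG0 Hstep HG1 Hz Heps.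
  destruct (Nat.eq_dec r 0) as [->|Hr]; [simpl; rewrite vnorm_z; lra|].
  pose proof (cuts_above_first G r Hstep) as HGmono. specialize (HG1 ltac:(lia)).
  set (x := comb e c m1).
  set (G' := fun j => if Nat.eqb j 0 then 0%nat else (G j - m1 + 1)%nat).
  (* coefficients for the shifted sequence: [1] on [x], then those of [e_(m1+1), ...] *)
  set (c' := fun k => if Nat.eqb k 1 then 1 else c (m1 + k - 1)%nat).
  apply (H x ltac:(exists c; split; auto) r G' _ eps); auto.
  - intros j Hj. unfold G'. destruct (Nat.eqb_spec (j - 1) 0); destruct (Nat.eqb_spec j 0);
      try lia; pose proof (HGmono j Hj); [|pose proof (Hstep j Hj);
      pose proof (HGmono (j - 1)%nat ltac:(lia))]; lia.
  - intros j Hj. exists (fun k => if Nat.eqb k 0 then 0 else c' k). split.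
    { intros i Hi. destruct (Nat.eqb_spec i 0); auto. unfold c'. destruct (Nat.eqb_spec i 1).
      - exfalso. apply Hi. unfold in_len, shifted_len. destruct N; [split; lia| split; auto; lia].
      - apply Hz. intros Hc. apply Hi. unfold in_len, shifted_len in *. destruct N; lia. }
    unfold G'. destruct (Nat.eqb_spec j 0); [lia|]. destruct (Nat.eqb_spec (j - 1) 0).
    + (* the first block: [x] followed by a shifted block *)
      assert (j = 1%nat) by lia. subst j. simpl (1 - 1)%nat. rewrite HG0.
      replace (G 1%nat - m1 + 1 - 0 - 1)%nat with (S (G 1%nat - m1 + 1 - 1 - 1)) by lia.
      simpl. unfold c', shifted_seq at 1. simpl. rewrite vscal_1.
      unfold block. replace (G 1%nat - 0 - 1)%nat with (m1 + (G 1%nat - m1 - 1))%nat by lia.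
      rewrite seq_app, vgsum_app. f_equal.
      replace (0 + 1 + m1)%nat with (2 + (m1 - 1))%nat by lia.
      replace (G 1%nat - m1 + 1 - 1 - 1)%nat with (G 1%nat - m1 - 1)%nat by lia.
      rewrite <- gsum_shift. apply gsum_ext. intros k Hk. apply in_seq in Hk. unfold shifted_seq.
      destruct (Nat.eqb_spec k 0); [lia|]. destruct (Nat.eqb_spec k 1); [lia|].
      replace (m1 + k - 1)%nat with (k + (m1 - 1))%nat by lia. reflexivity.
    + rewrite (shifted_block X e m1 x c) by (pose proof (HGmono (j - 1)%nat ltac:(lia));
        pose proof (Hstep j Hj); lia).
      unfold block. apply gsum_ext. intros k Hk. apply in_seq in Hk.
      destruct (Nat.eqb_spec k 0); [lia|]. unfold c'. destruct (Nat.eqb_spec k 1); [lia|]. auto.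
Qed.

Lemma span_lin (X : NormedSpace) L (f : nat -> X -> R) c :
  (forall k, (1 <= k <= L)%nat -> is_linear_fun X (f k)) ->
  is_linear_fun X (fun v => gsum 0 Rplus (seq 1 L) (fun k => c k * f k v)).
Proof.
  intros Hf a b x y. rewrite <- !rgsum_scal, <- rgsum_add. apply gsum_ext.
  intros k Hk. apply in_seq in Hk. rewrite (Hf k) by lia. ring.
Qed.

Lemma span_bounded (X : NormedSpace) L (f : nat -> X -> R) c :
  (forall k, (1 <= k <= L)%nat -> in_dual X (f k)) ->
  exists C, 0 <= C /\ forall v, Rabs (gsum 0 Rplus (seq 1 L) (fun k => c k * f k v)) <= C * vnorm v.
Proof.
  intros Hf.
  destruct (choice_fun 0 (fun k C => (1 <= k <= L)%nat -> 0 <= C /\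
              forall v, Rabs (f k v) <= C * vnorm v)) as [Cf HCf].
  { intros k. destruct (le_lt_dec 1 k); [destruct (le_lt_dec k L)|]; [|exists 0; lia..].
    destruct (Hf k ltac:(lia)) as [_ [C HC]]. exists (Rabs C). intros _. split; [apply Rabs_pos|].
    intros v. eapply Rle_trans; [apply HC|]. apply Rmult_le_compat_r; [apply vnorm_nonneg|apply Rle_abs]. }
  exists (gsum 0 Rplus (seq 1 L) (fun k => Rabs (c k) * Cf k)). split.
  { apply rgsum_nonneg. intros k Hk. apply in_seq in Hk.
    apply Rmult_le_pos; [apply Rabs_pos | apply HCf; lia]. }
  intros v. eapply Rle_trans. apply rgsum_abs. rewrite Rmult_comm, <- rgsum_scal. apply rgsum_le.
  intros k Hk. apply in_seq in Hk. rewrite Rabs_mult. destruct (HCf k ltac:(lia)) as [_ HC].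
  specialize (HC v). pose proof (Rabs_pos (c k)).
  apply Rle_trans with (Rabs (c k) * (Cf k * vnorm v)); [apply Rmult_le_compat_l; auto | right; ring].
Qed.

Lemma inF_lin (X : NormedSpace) L f g : (forall k, (1 <= k <= L)%nat -> is_linear_fun X (f k)) ->
  inF X L f g -> is_linear_fun X g.
Proof.
  intros Hf [c Hc] a b x y. rewrite !Hc. apply (span_lin X L f c Hf).
Qed.

Lemma dnorm_le1 (X : NormedSpace) (g : X -> R) : in_dual X g ->
  dnorm X g <= 1 -> forall v, Rabs (g v) <= vnorm v.
Proof.
  intros [Hl [C HC]] Hd v. destruct (Req_dec (vnorm v) 0) as [H0|H0].
  - apply vnorm_eq0 in H0. subst v. rewrite (lin_zero _ Hl), Rabs_R0, vnorm_z. lra.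
  - pose proof (vnorm_nonneg v).
    set (u := vscal (/ vnorm v) v).
    assert (Hu : vnorm u = 1).
    { unfold u. rewrite vnorm_scal, Rabs_right; [field|left; apply Rinv_0_lt_compat]; lra. }
    assert (Rabs (g u) <= dnorm X g) as H1.
    { unfold dnorm. apply (Rsup_ub _ _ (Rabs C)).
      - intros r [v' [Hv' ->]]. eapply Rle_trans. apply HC. pose proof (vnorm_nonneg v').
        apply Rle_trans with (Rabs C * vnorm v'). apply Rmult_le_compat_r; auto. apply Rle_abs.
        pose proof (Rabs_pos C). nra.
      - exists u. split; auto. lra. }
    unfold u in H1. rewrite (lin_scal _ Hl), Rabs_mult, Rabs_right in H1
      by (left; apply Rinv_0_lt_compat; lra).
    apply (Rmult_le_compat_l (vnorm v)) in H1; auto.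
    rewrite <- Rmult_assoc, Rinv_r, Rmult_1_l in H1 by lra. nra.
Qed.

Lemma dnorm_ge (X : NormedSpace) (g : X -> R) : (forall v, Rabs (g v) <= vnorm v) -> dnorm X g <= 1.
Proof.
  intros H. unfold dnorm. apply Rsup_le.
  - exists (Rabs (g vzero)), vzero. split; auto. rewrite vnorm_z; lra.
  - intros r [v [Hv ->]]. eapply Rle_trans; eauto.
Qed.

Lemma fseq_1 X estar m n xs ys : functional_seq X estar m n xs ys 1 = xs.
Proof. reflexivity. Qed.

Lemma fseq_mid X estar m n xs ys k : (2 <= k)%nat -> (k < Nat.max 2 n)%nat ->
  functional_seq X estar m n xs ys k = estar (m k).
Proof.
  intros H1 H2. unfold functional_seq. destruct (Nat.eqb_spec k 1); [lia|].
  destruct (Nat.ltb_spec k (Nat.max 2 n)); [auto|lia].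
Qed.

Lemma fseq_last X estar m n xs ys : functional_seq X estar m n xs ys (Nat.max 2 n) = ys.
Proof.
  unfold functional_seq. destruct (Nat.eqb_spec (Nat.max 2 n) 1); [lia|].
  destruct (Nat.ltb_spec (Nat.max 2 n) (Nat.max 2 n)); [lia|auto].
Qed.

Lemma m_mono (m : nat -> nat) n : (forall j, (1 <= j < n)%nat -> (m j < m (S j))%nat) ->
  forall a b, (1 <= a)%nat -> (a <= b)%nat -> (b <= n)%nat -> (m a + (b - a) <= m b)%nat.
Proof.
  intros H a b Ha Hab Hbn. induction Hab. lia.
  specialize (IHHab ltac:(lia)). specialize (H m0 ltac:(lia)). lia.
Qed.

Section DualSequence.
Variable X : NormedSpace.
Hypothesis HX : complete X.
Variable N : option nat.
Variable e : nat -> X.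
Variable estar : nat -> X -> R.
Hypothesis Hbasis : is_basis X N e.
Hypothesis Hbio : biorthogonal X N e estar.
Variable lam : R.
Variable n : nat.
Variable m : nat -> nat.
Hypothesis Hn : (1 <= n)%nat.
Hypothesis Hm1 : (1 <= m 1%nat)%nat.
Hypothesis Hmono : forall j, (1 <= j < n)%nat -> (m j < m (S j))%nat.
Hypothesis HmN : lt_len (m n) N.
Variables xs ys : X -> R.
Hypothesis Hxs : in_dual X xs.
Hypothesis Hys : in_dual X ys.
Variable d : nat -> R.
Hypothesis Hd : forall v, xs v = gsum 0 Rplus (seq 1 (m 1%nat)) (fun k => d k * estar k v).
Hypothesis HysF : forall j, (1 <= j <= m n)%nat -> ys (e j) = 0.

Local Notation L := (Nat.max 2 n).
Local Notation f := (functional_seq X estar m n xs ys).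
Local Notation psum := (psum X N e estar).
Local Notation coord := (coord X N estar).

Let Hmm : forall a b, (1 <= a)%nat -> (a <= b)%nat -> (b <= n)%nat -> (m a + (b - a) <= m b)%nat.
Proof. apply m_mono; auto. Qed.

Lemma m_le_mn k : (1 <= k <= n)%nat -> (m k <= m n)%nat.
Proof. intros Hk. pose proof (Hmm k n ltac:(lia) ltac:(lia) ltac:(lia)). lia. Qed.

Lemma idx_in_len i : (1 <= i <= m n)%nat -> in_len N i.
Proof. intros Hi. unfold in_len, lt_len in *. destruct N; lia. Qed.

Lemma m_in_len k : (1 <= k <= n)%nat -> in_len N (m k).
Proof.
  intros Hk. apply idx_in_len. pose proof (m_le_mn k Hk).
  pose proof (Hmm 1%nat k ltac:(lia) ltac:(lia) ltac:(lia)). lia.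
Qed.

(** The functionals [f_k] belong to [X^*] (the middle ones by Banach's theorem). *)
Lemma f_dual k : (1 <= k <= L)%nat -> in_dual X (f k).
Proof.
  intros Hk. destruct (Nat.eqb_spec k 1) as [->|]; auto.
  destruct (Nat.eqb_spec k L) as [->|]; [rewrite fseq_last; auto|].
  rewrite fseq_mid by lia. assert (Hin : in_len N (m k)) by (apply m_in_len; lia).
  split. apply (estar_lin X N e estar Hbasis Hbio _ Hin).
  apply (estar_bounded X HX N e estar Hbasis Hbio _ Hin).
Qed.

Lemma f_lin k : (1 <= k <= L)%nat -> is_linear_fun X (f k).
Proof. intros Hk. apply f_dual, Hk. Qed.

Lemma inF_dual g : inF X L f g -> in_dual X g.
Proof.
  intros [c Hc]. split; [apply (inF_lin X L f g f_lin); exists c; auto|].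
  destruct (span_bounded X L f c f_dual) as [C [_ HC]]. exists C. intros v. rewrite Hc. apply HC.
Qed.

Lemma f_e_mid k i : (2 <= k < L)%nat -> (1 <= i <= m n)%nat ->
  f k (e i) = if Nat.eqb (m k) i then 1 else 0.
Proof.
  intros Hk Hi. rewrite fseq_mid by lia.
  apply (estar_e X N e estar Hbasis Hbio); [apply m_in_len; lia | apply idx_in_len; lia].
Qed.

(** A vector dual to [x*]: [x*(x0) = 1], and [x0] is a multiple of some [e_(i0)], [i0 <= m_1]. *)
Lemma xs_dual_vector : (exists v, xs v <> 0) ->
  exists x0, xs x0 = 1 /\ forall k, (2 <= k <= L)%nat -> f k x0 = 0.
Proof.
  intros [v1 Hv1].
  assert (Hi0 : exists i0, (1 <= i0 <= m 1%nat)%nat /\ d i0 <> 0).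
  { apply NNPP. intros Hc. apply Hv1. rewrite Hd. apply rgsum_zero. intros i Hi.
    apply in_seq in Hi. destruct (Req_dec (d i) 0) as [->|Hne]; [ring|].
    exfalso; apply Hc. exists i; split; auto; lia. }
  destruct Hi0 as [i0 [Hi0 Hdi0]].
  pose proof (m_le_mn 1%nat ltac:(lia)) as Hm1n.
  exists (vscal (/ d i0) (e i0)). split.
  - rewrite Hd. rewrite (gsum_ext _ _ _ _ (fun i => / d i0 * (d i * (if Nat.eqb i0 i then 1 else 0)))).
    + rewrite rgsum_scal, rgsum_kronecker. field; auto. apply seq_NoDup. apply in_seq; lia.
    + intros i Hi. apply in_seq in Hi.
      rewrite (lin_scal _ (estar_lin X N e estar Hbasis Hbio i (idx_in_len i ltac:(lia)))).
      rewrite (estar_e X N e estar Hbasis Hbio) by (apply idx_in_len; lia).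
      rewrite Nat.eqb_sym. ring.
  - intros k Hk. rewrite (lin_scal _ (f_lin k ltac:(lia))).
    destruct (Nat.eqb_spec k L) as [->|].
    + rewrite fseq_last, HysF by lia. ring.
    + rewrite f_e_mid by lia. destruct (Nat.eqb_spec (m k) i0); [|ring].
      pose proof (Hmm 1%nat k ltac:(lia) ltac:(lia) ltac:(lia)). lia.
Qed.

(** A vector dual to [y*]: the tail [v - psum (m_n) v] of any [v] with [y*(v) <> 0]. *)
Lemma ys_dual_vector : (exists v, ys v <> 0) ->
  exists z0, ys z0 = 1 /\ forall j, (1 <= j <= m n)%nat -> estar j z0 = 0.
Proof.
  intros [v2 Hv2]. destruct Hys as [Hyl _].
  set (z1 := vsub v2 (psum (m n) v2)).
  assert (Hz1 : ys z1 = ys v2).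
  { unfold z1, psum, comb. rewrite (lin_sub _ Hyl), (lin_gsum _ Hyl), rgsum_zero; [ring|].
    intros i Hi. apply in_seq in Hi. rewrite (lin_scal _ Hyl), HysF by lia. ring. }
  exists (vscal (/ ys v2) z1). split.
  - rewrite (lin_scal _ Hyl), Hz1. field; auto.
  - intros j Hj. pose proof (idx_in_len j Hj) as Hjin.
    rewrite (lin_scal _ (estar_lin X N e estar Hbasis Hbio j Hjin)).
    unfold z1. rewrite (lin_sub _ (estar_lin X N e estar Hbasis Hbio j Hjin)).
    unfold psum. rewrite (estar_comb X N e estar Hbasis Hbio) by (auto; apply coord_zero_out).
    destruct (Nat.leb_spec j (m n)); [|lia]. rewrite coord_in by auto. ring.
Qed.

(** The [f_k] are biorthogonal to some vectors [vv_l]; in particular they are linearly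
    independent and [v |-> (f_k v)_k] maps onto [R^L]. *)
Lemma dual_vectors : (exists v, xs v <> 0) -> (exists v, ys v <> 0) ->
  exists vv : nat -> X, forall k l, (1 <= k <= L)%nat -> (1 <= l <= L)%nat ->
    f k (vv l) = if Nat.eqb k l then 1 else 0.
Proof.
  intros Hxs0 Hys0.
  destruct (xs_dual_vector Hxs0) as [x0 [Hx0 Hx0f]].
  destruct (ys_dual_vector Hys0) as [z0 [Hz0 Hz0e]].
  exists (fun l => if Nat.eqb l 1 then x0 else if Nat.ltb l L then e (m l) else z0).
  intros k l Hk Hl.
  destruct (Nat.eqb_spec l 1) as [->|Hl1]; [|destruct (Nat.ltb_spec l L) as [HlL|HlL]].
  - destruct (Nat.eqb_spec k 1) as [->|]; [exact Hx0|]. apply Hx0f. lia.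
  -
    assert (Hml : (m 1%nat + (l - 1) <= m l)%nat) by (apply Hmm; lia).
    pose proof (m_le_mn l ltac:(lia)).
    destruct (Nat.eqb_spec k 1) as [->|Hk1]; [|destruct (Nat.eqb_spec k L) as [->|HkL]].
    + rewrite fseq_1, Hd. destruct (Nat.eqb_spec 1 l); [lia|].
      apply rgsum_zero. intros i Hi. apply in_seq in Hi.
      rewrite (estar_e X N e estar Hbasis Hbio) by (apply idx_in_len; lia).
      destruct (Nat.eqb_spec i (m l)); [lia|ring].
    + rewrite fseq_last, HysF by lia. destruct (Nat.eqb_spec L l); [lia|auto].
    + rewrite f_e_mid by lia. destruct (Nat.eqb_spec k l) as [->|]; [rewrite Nat.eqb_refl; auto|].
      destruct (Nat.eqb_spec (m k) (m l)); auto. exfalso.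
      destruct (Nat.lt_total k l) as [Hkl|[Hkl|Hkl]]; try lia;
        [pose proof (Hmm k l ltac:(lia) ltac:(lia) ltac:(lia)) |
         pose proof (Hmm l k ltac:(lia) ltac:(lia) ltac:(lia))]; lia.
  -
    assert (l = L) as -> by lia.
    destruct (Nat.eqb_spec k 1) as [->|Hk1]; [|destruct (Nat.eqb_spec k L) as [->|HkL]].
    + rewrite fseq_1, Hd. destruct (Nat.eqb_spec 1 L); [lia|].
      apply rgsum_zero. intros i Hi. apply in_seq in Hi.
      rewrite Hz0e by (pose proof (m_le_mn 1%nat ltac:(lia)); lia). ring.
    + rewrite fseq_last. exact Hz0.
    + rewrite fseq_mid by lia.
      apply Hz0e. pose proof (m_le_mn k ltac:(lia)). pose proof (m_in_len k ltac:(lia)).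
      unfold in_len in *. destruct N; lia.
Qed.

(** [lam >= 0], by testing the skipped inequality on the single vector [e_1]. *)
Lemma lam_nonneg : skipped_beyond X N e (m 1%nat) lam -> 0 <= lam.
Proof.
  intros Hyp. assert (H1 : in_len N 1) by (apply idx_in_len; pose proof (m_le_mn 1%nat); lia).
  pose proof (Hyp 1%nat (fun j => if Nat.eqb j 0 then 0%nat else (m 1%nat + 2)%nat) (delta 1)
    (fun _ => 1) eq_refl ltac:(intros j Hj; replace j with 1%nat by lia; simpl; lia)
    ltac:(intros; simpl; lia) (delta_zero_out N 1 H1) ltac:(intros; left; auto)) as H.
  simpl in H. rewrite vscal_1, !vadd_0 in H. unfold block in H. simpl in H.
  replace (m 1%nat + 2 - 0 - 1)%nat with (m 1%nat + 1)%nat in H by lia.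
  fold (comb e (delta 1) (m 1%nat + 1)) in H.
  rewrite comb_stable with (p := 1%nat) in H
    by (try lia; intros k Hk; unfold delta; destruct (Nat.eqb_spec k 1); auto; lia).
  rewrite comb_delta in H by lia.
  pose proof (e_nonzero X N e estar Hbasis Hbio 1%nat H1). nra.
Qed.

(** *** Transferring signs from blocks of [F^*] to blocks of [X]

    Blocks of the dual basis [(f_k^* )] are cut at [0 = mm_0 < mm_1 < ... < mm_q] (gaps
    [>= 2]) and carry signs [eps_j].  Extended by one last block [(mm_q, L]] with sign [1],
    this gives a sign [tau_k] for every [k] in [1..L] not of the form [mm_j].  The key
    estimate: for [g = sum a_k f_k] of dual norm [<= 1] and [z] with vanishing skipped
    coordinates [f_(mm_j)(z)], [|sum_k a_k tau_k f_k(z)| <= lam |z|].  It is obtained by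
    cutting a partial sum of [z] into blocks of the basis at the indices [m_(mm_j)] and
    applying [skipped_beyond]. *)
Section SignTransfer.
Hypothesis Hyp : skipped_beyond X N e (m 1%nat) lam.
Variable q : nat.
Variable mm : nat -> nat.
Variable eps : nat -> R.
Hypothesis Hmm0 : mm 0%nat = 0%nat.
Hypothesis Hstep : forall j, (1 <= j <= q)%nat -> (mm (j - 1) + 2 <= mm j)%nat.
Hypothesis Heps : forall j, (1 <= j <= q)%nat -> eps j = 1 \/ eps j = -1.

Definition mmx (j : nat) : nat := if Nat.leb j q then mm j else (mm q + L + 2)%nat.
Definition epsx (j : nat) : R := if Nat.leb j q then eps j else 1.

(** [sg j k] is the indicator of [mmx (j-1) < k <= mmx j], and [tau k] the sign of [k]. *)
Definition sg (j k : nat) : R :=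
  (if Nat.leb k (mmx j) then 1 else 0) - (if Nat.leb k (mmx (j - 1)%nat) then 1 else 0).
Definition tau (k : nat) : R := gsum 0 Rplus (seq 1 (S q)) (fun j => epsx j * sg j k).

Lemma mmx_le j : (j <= q)%nat -> mmx j = mm j.
Proof. intros Hj. unfold mmx. destruct (Nat.leb_spec j q); auto; lia. Qed.

Lemma mmx_last : mmx (S q) = (mm q + L + 2)%nat.
Proof. unfold mmx. destruct (Nat.leb_spec (S q) q); auto; lia. Qed.

Lemma mmx_step j : (1 <= j <= S q)%nat -> (mmx (j - 1) + 2 <= mmx j)%nat.
Proof.
  intros Hj. destruct (Nat.eq_dec j (S q)) as [->|].
  - rewrite mmx_last, mmx_le by lia. replace (S q - 1)%nat with q by lia. lia.
  - rewrite !mmx_le by lia. apply Hstep; lia.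
Qed.

Lemma mmx_mono i j : (i <= j <= S q)%nat -> (mmx i + 2 * (j - i) <= mmx j)%nat.
Proof.
  intros [Hij Hjq]. induction Hij. lia.
  specialize (IHHij ltac:(lia)). pose proof (mmx_step (S m0) ltac:(lia)) as H. simpl in H.
  replace (m0 - 0)%nat with m0 in H by lia. lia.
Qed.

Lemma mmx_ge2 j : (1 <= j <= S q)%nat -> (2 <= mmx j)%nat.
Proof. intros Hj. pose proof (mmx_mono 0%nat j ltac:(lia)). lia. Qed.

Lemma epsx_sign j : (1 <= j <= S q)%nat -> epsx j = 1 \/ epsx j = -1.
Proof. intros Hj. unfold epsx. destruct (Nat.leb_spec j q); auto. apply Heps; lia. Qed.

(** Cutting [psum P z] (with [P >= m_n]) at the basis indices [G j = m (mmx j)]; cuts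
    beyond the last functional are moved beyond [P]. *)
Section Cuts.
Variable P : nat.
Hypothesis HP : (m n <= P)%nat.

Definition G (j : nat) : nat :=
  if Nat.eqb j 0 then 0%nat else if Nat.ltb (mmx j) L then m (mmx j) else (P + 2 * j)%nat.

Lemma G_mid j : (1 <= j <= S q)%nat -> (mmx j < L)%nat -> G j = m (mmx j) /\ (mmx j < n)%nat.
Proof.
  intros Hj Hl. pose proof (mmx_ge2 j Hj). unfold G.
  destruct (Nat.eqb_spec j 0); [lia|]. destruct (Nat.ltb_spec (mmx j) L); [|lia].
  split; auto; lia.
Qed.

Lemma G_far j : (1 <= j)%nat -> (L <= mmx j)%nat -> G j = (P + 2 * j)%nat.
Proof.
  intros Hj Hl. unfold G. destruct (Nat.eqb_spec j 0); [lia|].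
  destruct (Nat.ltb_spec (mmx j) L); [lia|auto].
Qed.

Lemma G_step j : (1 <= j <= S q)%nat -> (G (j - 1) + 2 <= G j)%nat.
Proof.
  intros Hj. pose proof (mmx_step j Hj).
  destruct (Nat.eq_dec j 1) as [->|Hj1].
  - change (G 0%nat + 2 <= G 1%nat)%nat. unfold G at 1; simpl.
    destruct (Nat.ltb_spec (mmx 1%nat) L).
    + destruct (G_mid 1%nat ltac:(lia) H0) as [-> Hn'].
      pose proof (Hmm 1%nat (mmx 1%nat) ltac:(lia) ltac:(pose proof (mmx_ge2 1%nat); lia) ltac:(lia)).
      pose proof (mmx_ge2 1%nat ltac:(lia)). lia.
    + rewrite G_far by lia. lia.
  - pose proof (mmx_ge2 (j - 1)%nat ltac:(lia)).
    destruct (Nat.ltb_spec (mmx (j - 1)%nat) L); destruct (Nat.ltb_spec (mmx j) L).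
    + destruct (G_mid j Hj H2) as [-> Hn1]. destruct (G_mid (j - 1)%nat ltac:(lia) H1) as [-> Hn2].
      pose proof (Hmm (mmx (j - 1)%nat) (mmx j) ltac:(lia) ltac:(lia) ltac:(lia)). lia.
    + destruct (G_mid (j - 1)%nat ltac:(lia) H1) as [-> Hn2]. rewrite (G_far j) by lia.
      pose proof (m_le_mn (mmx (j - 1)%nat) ltac:(lia)). lia.
    + lia.
    + rewrite (G_far j), (G_far (j - 1)%nat) by lia. lia.
Qed.

Lemma G_first : (m 1%nat < G 1%nat)%nat.
Proof.
  pose proof (mmx_ge2 1%nat ltac:(lia)). destruct (Nat.ltb_spec (mmx 1%nat) L).
  - destruct (G_mid 1%nat ltac:(lia) H0) as [-> Hn'].
    pose proof (Hmm 1%nat (mmx 1%nat) ltac:(lia) ltac:(lia) ltac:(lia)). lia.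
  - rewrite G_far by lia. pose proof (m_le_mn 1%nat ltac:(lia)). lia.
Qed.

Lemma G_above_first j : (1 <= j <= S q)%nat -> (G 1%nat <= G j)%nat.
Proof. apply cuts_above_first, G_step. Qed.

Lemma G_index k j : (1 <= j <= S q)%nat -> (2 <= k < L)%nat -> ((m k <= G j)%nat <-> (k <= mmx j)%nat).
Proof.
  intros Hj Hk. destruct (Nat.ltb_spec (mmx j) L).
  - destruct (G_mid j Hj H) as [-> Hn']. pose proof (mmx_ge2 j Hj). split; intros H1.
    + destruct (le_lt_dec k (mmx j)); auto.
      pose proof (Hmm (mmx j) k ltac:(lia) ltac:(lia) ltac:(lia)). lia.
    + pose proof (Hmm k (mmx j) ltac:(lia) H1 ltac:(lia)). lia.
  - rewrite G_far by lia. split; intros; [lia|]. pose proof (m_le_mn k ltac:(lia)). lia.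
Qed.

Variable z : X.
Hypothesis Hz_skip : forall j, (1 <= j <= q)%nat -> (mm j < L)%nat -> f (mm j) z = 0.

Definition cP (i : nat) : R := if Nat.leb i P then coord z i else 0.
Definition A (j : nat) : X := comb e cP (G j).

Lemma cP_zero_out : zero_out N cP.
Proof. intros i Hi. unfold cP. rewrite (coord_zero_out X N estar z i Hi). destruct (Nat.leb i P); auto. Qed.

Lemma comb_cP_beyond p : (P <= p)%nat -> comb e cP p = psum P z.
Proof.
  intros Hp. rewrite (comb_stable e cP P p Hp)
    by (intros i Hi; unfold cP; destruct (Nat.leb_spec i P); auto; lia).
  apply comb_ext. intros i Hi. unfold cP. destruct (Nat.leb_spec i P); auto; lia.
Qed.

(** The coordinates at the cut indices vanish, so the cuts fall on skipped places. *)
Lemma cP_G j : (1 <= j <= S q)%nat -> cP (G j) = 0.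
Proof.
  intros Hj. destruct (Nat.ltb_spec (mmx j) L) as [Hl|Hl].
  - destruct (G_mid j Hj Hl) as [-> Hn']. pose proof (mmx_ge2 j Hj).
    assert (Hjq : (j <= q)%nat) by (destruct (Nat.eq_dec j (S q)) as [->|]; [rewrite mmx_last in Hl|]; lia).
    rewrite mmx_le in * by auto. pose proof (m_le_mn (mm j) ltac:(lia)).
    unfold cP. destruct (Nat.leb_spec (m (mm j)) P); [|lia].
    rewrite coord_in by (apply m_in_len; lia). rewrite <- (fseq_mid X estar m n xs ys) by lia.
    apply Hz_skip; lia.
  - rewrite G_far by lia. unfold cP. destruct (Nat.leb_spec (P + 2 * j) P); auto; lia.
Qed.

Lemma estar_A i j : in_len N i -> (1 <= j)%nat -> (i <= m n)%nat ->
  estar i (A j) = if Nat.leb i (G j) then coord z i else 0.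
Proof.
  intros Hi Hj HiP. unfold A. rewrite (estar_comb X N e estar Hbasis Hbio) by (auto; apply cP_zero_out).
  unfold cP. destruct (Nat.leb_spec i P); [auto|lia].
Qed.

Lemma f_A j k : (j <= S q)%nat -> (1 <= k <= L)%nat ->
  f k (A j) = (if Nat.leb k (mmx j) then 1 else 0) * f k (psum P z).
Proof.
  intros Hj Hk. destruct (Nat.eq_dec j 0) as [->|Hj0].
  { unfold A, G. simpl. rewrite comb_0, (lin_zero _ (f_lin k Hk)), mmx_le by lia.
    rewrite Hmm0. destruct (Nat.leb_spec k 0); [lia|]. ring. }
  pose proof (mmx_ge2 j ltac:(lia)). pose proof (G_above_first j ltac:(lia)). pose proof G_first.
  pose proof (m_le_mn 1%nat ltac:(lia)).
  assert (HSp : forall i, in_len N i -> (i <= m n)%nat -> estar i (psum P z) = coord z i).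
  { intros i Hi HiP. unfold psum. rewrite (estar_comb X N e estar Hbasis Hbio) by (auto; apply coord_zero_out).
    destruct (Nat.leb_spec i P); [|lia]. auto. }
  destruct (Nat.eq_dec k 1) as [->|Hk1]; [|destruct (Nat.eq_dec k L) as [->|HkL]].
  - (* [x*] only sees indices [<= m_1 < G j] *)
    rewrite !fseq_1, !Hd. destruct (Nat.leb_spec 1 (mmx j)); [|lia]. rewrite Rmult_1_l.
    apply gsum_ext. intros i Hi. apply in_seq in Hi. f_equal.
    assert (in_len N i) by (apply idx_in_len; lia).
    rewrite (estar_A i j), (HSp i) by (try assumption; lia). destruct (Nat.leb_spec i (G j)); [auto|lia].
  - (* [y*] vanishes on [A j] unless the cut lies beyond [P] *)
    rewrite !fseq_last. destruct (Nat.ltb_spec (mmx j) L).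
    + destruct (Nat.leb_spec L (mmx j)); [lia|]. rewrite Rmult_0_l.
      unfold A. destruct (G_mid j ltac:(lia) H3) as [-> Hn'].
      unfold comb. rewrite (lin_gsum _ (proj1 Hys)). apply rgsum_zero. intros i Hi. apply in_seq in Hi.
      pose proof (m_le_mn (mmx j) ltac:(lia)).
      rewrite (lin_scal _ (proj1 Hys)), HysF by lia. ring.
    + destruct (Nat.leb_spec L (mmx j)); [|lia]. rewrite Rmult_1_l. unfold A.
      rewrite G_far, comb_cP_beyond by lia. auto.
  -
    rewrite !fseq_mid by lia. pose proof (m_le_mn k ltac:(lia)).
    rewrite estar_A, HSp by (try apply m_in_len; lia).
    pose proof (G_index k j ltac:(lia) ltac:(lia)) as Hgk.
    destruct (Nat.leb_spec (m k) (G j)) as [Ha|Ha]; destruct (Nat.leb_spec k (mmx j)) as [Hb|Hb];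
      try ring; exfalso; [apply Hgk in Ha | apply Hgk in Hb]; lia.
Qed.

Lemma block_cut j : (1 <= j <= S q)%nat -> block e cP (G (j - 1)%nat) (G j) = vsub (A j) (A (j - 1)%nat).
Proof. intros Hj. apply block_comb. apply cP_G; auto. pose proof (G_step j Hj). lia. Qed.

Lemma f_block j k : (1 <= j <= S q)%nat -> (1 <= k <= L)%nat ->
  f k (block e cP (G (j - 1)%nat) (G j)) = sg j k * f k (psum P z).
Proof.
  intros Hj Hk. rewrite block_cut, (lin_sub _ (f_lin k Hk)), !f_A by (auto; lia).
  unfold sg. ring.
Qed.

Lemma blocks_sum :
  gsum vzero vadd (seq 1 (S q)) (fun j => block e cP (G (j - 1)%nat) (G j)) = psum P z.
Proof.
  rewrite (gsum_ext _ _ _ _ (fun j => vsub (A j) (A (j - 1)%nat)))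
    by (intros j Hj; apply in_seq in Hj; apply block_cut; lia).
  rewrite vgsum_telescope. change (A 0%nat) with (@vzero X). rewrite vsub_0r.
  unfold A. rewrite G_far, comb_cP_beyond by (rewrite ?mmx_last; lia). reflexivity.
Qed.

Lemma transfer_finite (a : nat -> R) :
  (forall v, Rabs (gsum 0 Rplus (seq 1 L) (fun k => a k * f k v)) <= vnorm v) ->
  Rabs (gsum 0 Rplus (seq 1 L) (fun k => a k * tau k * f k (psum P z))) <= lam * vnorm (psum P z).
Proof.
  intros Hg.
  set (T := gsum vzero vadd (seq 1 (S q))
              (fun j => vscal (epsx j) (block e cP (G (j - 1)%nat) (G j)))).
  assert (HT : vnorm T <= lam * vnorm (psum P z)).
  { rewrite <- blocks_sum. apply Hyp; auto using G_step, G_first, cP_zero_out, epsx_sign. }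
  assert (HfT : forall k, (1 <= k <= L)%nat -> f k T = tau k * f k (psum P z)).
  { intros k Hk. unfold T, tau. rewrite (lin_gsum _ (f_lin k Hk)), Rmult_comm, <- rgsum_scal.
    apply gsum_ext. intros j Hj. apply in_seq in Hj.
    rewrite (lin_scal _ (f_lin k Hk)), f_block by lia. ring. }
  specialize (Hg T). rewrite (gsum_ext _ _ _ _ (fun k => a k * tau k * f k (psum P z))) in Hg.
  - lra.
  - intros k Hk. apply in_seq in Hk. rewrite HfT by lia. ring.
Qed.

End Cuts.

(** The key estimate, obtained from [transfer_finite] by letting [P -> infinity]. *)
Lemma sign_transfer (a : nat -> R) (z : X) :
  (forall j, (1 <= j <= q)%nat -> (mm j < L)%nat -> f (mm j) z = 0) ->
  (forall v, Rabs (gsum 0 Rplus (seq 1 L) (fun k => a k * f k v)) <= vnorm v) ->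
  Rabs (gsum 0 Rplus (seq 1 L) (fun k => a k * tau k * f k z)) <= lam * vnorm z.
Proof.
  intros Hz Hg. pose proof (lam_nonneg Hyp) as Hlam.
  set (phi := fun v => gsum 0 Rplus (seq 1 L) (fun k => (a k * tau k) * f k v)).
  destruct (span_bounded X L f (fun k => a k * tau k) f_dual) as [K [HK HphiK]].
  assert (Hphil : is_linear_fun X phi) by (apply (span_lin X L f _ f_lin)).
  apply Rle_plus_epsilon. intros eta Heta.
  destruct (psum_conv X N e estar Hbasis Hbio z (eta / (lam + K + 1))) as [P0 HP0].
  { apply Rdiv_lt_0_compat; lra. }
  set (P := max P0 (m n)). specialize (HP0 P ltac:(unfold P; lia)).
  pose proof (transfer_finite P ltac:(unfold P; lia) z Hz a Hg) as Hfin. fold (phi (psum P z)) in Hfin.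
  pose proof (HphiK (vsub (psum P z) z)) as Hdiff. fold (phi (vsub (psum P z) z)) in Hdiff.
  rewrite (lin_sub _ Hphil) in Hdiff. fold (phi z).
  pose proof (vnorm_add_sub (psum P z) z).
  assert ((lam + K) * vnorm (vsub (psum P z) z) <= eta).
  { apply Rle_trans with ((lam + K + 1) * (eta / (lam + K + 1))).
    pose proof (vnorm_nonneg (vsub (psum P z) z)). nra.
    right. field. lra. }
  pose proof (Rabs_triang_inv (phi (psum P z)) (phi (psum P z) - phi z)).
  replace (phi (psum P z) - (phi (psum P z) - phi z)) with (phi z) in * by ring.
  pose proof (Rabs_triang (phi (psum P z)) (- (phi (psum P z) - phi z))).
  rewrite Rabs_Ropp in H2. replace (phi (psum P z) + - (phi (psum P z) - phi z)) with (phi z) in H2 by ring.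
  nra.
Qed.

Lemma tau_in_block j0 k : (1 <= j0 <= q)%nat -> (mm (j0 - 1) < k < mm j0)%nat -> tau k = eps j0.
Proof.
  intros Hj0 Hk. unfold tau. rewrite (rgsum_pick 1 (S q) j0); [| lia |].
  - unfold sg, epsx. rewrite !mmx_le by lia. destruct (Nat.leb_spec j0 q); [|lia].
    destruct (Nat.leb_spec k (mm j0)); [|lia]. destruct (Nat.leb_spec k (mm (j0 - 1))); [lia|]. ring.
  - intros j Hj Hne. apply in_seq in Hj. unfold sg. pose proof (mmx_step j ltac:(lia)).
    destruct (Nat.lt_total j j0) as [Hl|[Hl|Hl]]; [|lia|].
    + pose proof (mmx_mono j (j0 - 1)%nat ltac:(lia)). rewrite (mmx_le (j0 - 1)) in * by lia.
      destruct (Nat.leb_spec k (mmx j)); [lia|]. destruct (Nat.leb_spec k (mmx (j - 1)%nat)); [lia|]. ring.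
    + pose proof (mmx_mono j0 (j - 1)%nat ltac:(lia)). rewrite (mmx_le j0) in * by lia.
      destruct (Nat.leb_spec k (mmx j)); [|lia]. destruct (Nat.leb_spec k (mmx (j - 1)%nat)); [|lia]. ring.
Qed.

Variable w : nat -> X.
Hypothesis Hw : forall j k, (1 <= j <= q)%nat -> (1 <= k <= L)%nat ->
  ~ (mm (j - 1) < k < mm j)%nat -> f k (w j) = 0.

Lemma w_other_blocks j0 k : (1 <= j0 <= q)%nat -> (mm (j0 - 1) < k < mm j0)%nat ->
  (1 <= k <= L)%nat -> forall j, (1 <= j <= q)%nat -> j <> j0 -> f k (w j) = 0.
Proof.
  intros Hj0 Hk HkL j Hj Hne. apply Hw; auto. intros Hkj.
  destruct (Nat.lt_total j j0) as [Hl|[Hl|Hl]]; [|lia|].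
  - pose proof (mmx_mono j (j0 - 1)%nat ltac:(lia)). rewrite !mmx_le in * by lia. lia.
  - pose proof (mmx_mono j0 (j - 1)%nat ltac:(lia)). rewrite !mmx_le in * by lia. lia.
Qed.

Lemma f_sum_blocks k (c : nat -> R) : (1 <= k <= L)%nat ->
  (forall j0, (1 <= j0 <= q)%nat -> ~ (mm (j0 - 1) < k < mm j0)%nat) ->
  f k (gsum vzero vadd (seq 1 q) (fun j => vscal (c j) (w j))) = 0.
Proof.
  intros Hk Hout. rewrite (lin_gsum _ (f_lin k Hk)). apply rgsum_zero. intros j Hj.
  apply in_seq in Hj. rewrite (lin_scal _ (f_lin k Hk)), Hw by (try apply Hout; lia). ring.
Qed.

Lemma f_sum_block k j0 (c : nat -> R) : (1 <= k <= L)%nat -> (1 <= j0 <= q)%nat ->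
  (mm (j0 - 1) < k < mm j0)%nat ->
  f k (gsum vzero vadd (seq 1 q) (fun j => vscal (c j) (w j))) = c j0 * f k (w j0).
Proof.
  intros Hk Hj0 Hkj0. rewrite (lin_gsum _ (f_lin k Hk)), (rgsum_pick 1 q j0); [| lia |].
  - apply (lin_scal _ (f_lin k Hk)).
  - intros j Hj Hne. apply in_seq in Hj.
    rewrite (lin_scal _ (f_lin k Hk)), (w_other_blocks j0 k) by (auto; lia). ring.
Qed.

Lemma sign_change_bound (a : nat -> R) (z : X) :
  (forall v, Rabs (gsum 0 Rplus (seq 1 L) (fun k => a k * f k v)) <= vnorm v) ->
  (forall k, (1 <= k <= L)%nat -> f k z = f k (gsum vzero vadd (seq 1 q) w)) ->
  Rabs (gsum 0 Rplus (seq 1 L)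
          (fun k => a k * f k (gsum vzero vadd (seq 1 q) (fun j => vscal (eps j) (w j)))))
  <= lam * vnorm z.
Proof.
  intros Hg Hz.
  assert (HW1 : gsum vzero vadd (seq 1 q) w = gsum vzero vadd (seq 1 q) (fun j => vscal 1 (w j)))
    by (apply gsum_ext; intros; rewrite vscal_1; reflexivity).
  rewrite HW1 in Hz.
  (* on each coordinate, the sign change acts as multiplication by [tau] *)
  rewrite (gsum_ext _ _ _ _ (fun k => a k * tau k * f k z)).
  - apply sign_transfer; auto. intros j Hj HjL. pose proof (mmx_ge2 j ltac:(lia)).
    rewrite mmx_le in * by lia. rewrite Hz by lia. apply f_sum_blocks; [lia|].
    intros j0 Hj0 Hin. destruct (Nat.lt_total j j0) as [Hl|[Hl|Hl]]; [|subst; lia|].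
    + pose proof (mmx_mono j (j0 - 1)%nat ltac:(lia)). rewrite !mmx_le in * by lia. lia.
    + pose proof (mmx_mono j0 j ltac:(lia)). rewrite !mmx_le in * by lia. lia.
  - intros k Hk. apply in_seq in Hk. rewrite Hz by lia.
    destruct (classic (exists j0, (1 <= j0 <= q)%nat /\ (mm (j0 - 1) < k < mm j0)%nat))
      as [[j0 [Hj0 Hkj0]]|Hout].
    + rewrite !(f_sum_block k j0), (tau_in_block j0 k) by (auto; lia). ring.
    + rewrite !f_sum_blocks by (eauto; lia). ring.
Qed.

End SignTransfer.

Section FNorm.
Variable vv : nat -> X.
Hypothesis Hvv : forall k l, (1 <= k <= L)%nat -> (1 <= l <= L)%nat ->
  f k (vv l) = if Nat.eqb k l then 1 else 0.

Definition Fnorm (W : X) : R := Fs_norm X L f (fun g => g W).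

Lemma Fs_norm_eval (Pf : (X -> R) -> R) W :
  (forall g, is_linear_fun X g -> Pf g = g W) -> Fs_norm X L f Pf = Fnorm W.
Proof.
  intros HPf. unfold Fnorm, Fs_norm. apply Rsup_ext. intros r.
  split; intros [g [Hg1 [Hg2 ->]]]; exists g; repeat split; auto; rewrite HPf; auto;
    apply (inF_lin X L f g f_lin Hg1).
Qed.

Let Fnorm_set_bounded W r :
  (exists g, inF X L f g /\ dnorm X g <= 1 /\ r = Rabs (g W)) -> r <= vnorm W.
Proof. intros [g [Hg1 [Hg2 ->]]]. apply dnorm_le1; auto using inF_dual. Qed.

Let Fnorm_set_ne W : exists r, exists g, inF X L f g /\ dnorm X g <= 1 /\ r = Rabs (g W).
Proof.
  exists (Rabs 0), (fun _ => 0). split; [|split; auto].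
  - exists (fun _ => 0). intros v. rewrite rgsum_zero; auto. intros; ring.
  - apply dnorm_ge. intros v. rewrite Rabs_R0. apply vnorm_nonneg.
Qed.

Lemma Fnorm_le W B : (forall g, inF X L f g -> (forall v, Rabs (g v) <= vnorm v) -> Rabs (g W) <= B) ->
  Fnorm W <= B.
Proof.
  intros HB. apply Rsup_le; [apply Fnorm_set_ne|]. intros r [g [Hg1 [Hg2 ->]]].
  apply HB; auto. apply dnorm_le1; auto using inF_dual.
Qed.

(** Hahn-Banach: the quotient norm [inf { |z| : f z = f W }] is at most [Fnorm W]. *)
Lemma Fnorm_quotient W eta : 0 < eta ->
  exists z, (forall k, (1 <= k <= L)%nat -> f k z = f k W) /\ vnorm z < Fnorm W + eta.
Proof.
  intros Heta.
  assert (Hsurj : forall a : nat -> R, exists v, forall k, (1 <= k <= L)%nat -> f k v = a k).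
  { intros a. exists (gsum vzero vadd (seq 1 L) (fun k => vscal (a k) (vv k))). intros k Hk.
    rewrite (lin_gsum _ (f_lin k Hk)).
    rewrite (gsum_ext _ _ _ _ (fun l => a l * (if Nat.eqb k l then 1 else 0))).
    - apply rgsum_kronecker. apply seq_NoDup. apply in_seq; lia.
    - intros l Hl. apply in_seq in Hl. rewrite (lin_scal _ (f_lin k Hk)), Hvv by lia. auto. }
  destruct (quotient_norming X L f f_lin Hsurj W) as [c [Hc1 Hc2]].
  destruct (Hc2 eta Heta) as [z [Hz1 Hz2]]. exists z. split; auto.
  set (g0 := fun v => dotL L c (fun k => f k v)).
  assert (Hg0F : inF X L f g0) by (exists c; intros v; reflexivity).
  assert (g0 W <= Fnorm W); [|unfold g0 in *; lra].
  eapply Rle_trans; [apply Rle_abs|]. apply (Rsup_ub _ _ (vnorm W)); [apply Fnorm_set_bounded|].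
  exists g0. repeat split; auto. apply dnorm_ge. intros v. apply Rabs_le. split.
  - pose proof (Hc1 (vscal (-1) v)) as H. fold (g0 (vscal (-1) v)) in H.
    rewrite (lin_scal _ (inF_lin X L f g0 f_lin Hg0F)), vnorm_scal in H.
    replace (Rabs (-1)) with 1 in H by (rewrite Rabs_left; lra). lra.
  - apply Hc1.
Qed.

End FNorm.

Lemma dual_block_vectors vv q (mm : nat -> nat) (yy : nat -> (X -> R) -> R) :
  (forall k l, (1 <= k <= L)%nat -> (1 <= l <= L)%nat -> f k (vv l) = if Nat.eqb k l then 1 else 0) ->
  (forall j, (1 <= j <= q)%nat ->
     block_span (Fs_zero X) (Fs_add X) (Fs_scal X) (Some L) (fun k g => g (vv k))
       (mm (j - 1) + 1)%nat (mm j - mm (j - 1) - 1)%nat (yy j)) ->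
  exists w : nat -> X,
    (forall j g, (1 <= j <= q)%nat -> is_linear_fun X g -> yy j g = g (w j)) /\
    (forall j k, (1 <= j <= q)%nat -> (1 <= k <= L)%nat ->
       ~ (mm (j - 1) < k < mm j)%nat -> f k (w j) = 0).
Proof.
  intros Hvv Hblk.
  destruct (choice_fun (fun _ => 0) (fun j (c : nat -> R) => (1 <= j <= q)%nat ->
      (forall i, ~ in_len (Some L) i -> c i = 0) /\
      yy j = gsum (Fs_zero X) (Fs_add X) (seq (mm (j - 1)%nat + 1) (mm j - mm (j - 1)%nat - 1))
               (fun i => Fs_scal X (c i) (fun g => g (vv i))))) as [Cc HCc].
  { intros j. destruct (le_lt_dec 1 j); [destruct (le_lt_dec j q)|]; [|exists (fun _ => 0); lia..].
    destruct (Hblk j ltac:(lia)) as [c [Hc1 Hc2]]. exists c. auto. }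
  exists (fun j => block vv (Cc j) (mm (j - 1)%nat) (mm j)). split.
  - intros j g Hj Hg. destruct (HCc j Hj) as [_ ->]. rewrite Fs_gsum_eval. unfold block.
    rewrite (lin_gsum _ Hg). apply gsum_ext. intros i _. unfold Fs_scal. rewrite (lin_scal _ Hg). auto.
  - intros j k Hj Hk Hout. unfold block. rewrite (lin_gsum _ (f_lin k Hk)). apply rgsum_zero.
    intros i Hi. apply in_seq in Hi. rewrite (lin_scal _ (f_lin k Hk)).
    destruct (le_lt_dec i L).
    + rewrite Hvv by lia. destruct (Nat.eqb_spec k i); [lia|ring].
    + rewrite (proj1 (HCc j Hj) i) by (unfold in_len; lia). ring.
Qed.

Theorem dual_skipped : skipped_beyond X N e (m 1%nat) lam ->
  (exists v, xs v <> 0) -> (exists v, ys v <> 0) ->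
  dual_skipped_uncond_basis X L f lam.
Proof.
  intros Hyp Hxs0 Hys0. destruct (dual_vectors Hxs0 Hys0) as [vv Hvv].
  split.
  { (* linear independence: test a vanishing combination on [vv k] *)
    intros c Hc k Hk. specialize (Hc (vv k)).
    rewrite (rgsum_pick 1 L k) in Hc; [| lia |].
    - rewrite Hvv, Nat.eqb_refl in Hc by lia. lra.
    - intros l Hl Hne. apply in_seq in Hl. rewrite Hvv by lia.
      destruct (Nat.eqb_spec l k); [lia|ring]. }
  exists (fun k g => g (vv k)). split; [|split].
  { intros; reflexivity. }
  { intros k l Hk Hl. rewrite Hvv by auto. rewrite Nat.eqb_sym. reflexivity. }
  intros q mm yy eps Hmm0 Hstep Hblk Heps.
  destruct (dual_block_vectors vv q mm yy Hvv Hblk) as [w [Hyyw Hw]].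
  (* both sides are [F^*]-norms of evaluations, at [sum eps_j w_j] and [sum w_j] *)
  rewrite (Fs_norm_eval _ (gsum vzero vadd (seq 1 q) (fun j => vscal (eps j) (w j)))),
    (Fs_norm_eval _ (gsum vzero vadd (seq 1 q) w)).
  2,3: intros g Hg; rewrite Fs_gsum_eval, (lin_gsum _ Hg); apply gsum_ext;
    intros j Hj; apply in_seq in Hj; unfold Fs_scal; rewrite ?(lin_scal _ Hg), Hyyw by (auto; lia); auto.
  apply Fnorm_le. intros g [a Ha] Hg. apply Rle_plus_epsilon. intros eta Heta.
  pose proof (lam_nonneg Hyp) as Hlam.
  destruct (Fnorm_quotient vv Hvv (gsum vzero vadd (seq 1 q) w) (eta / (lam + 1))) as [z [Hz1 Hz2]].
  { apply Rdiv_lt_0_compat; lra. }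
  rewrite Ha. eapply Rle_trans.
  { apply (sign_change_bound Hyp q mm eps Hmm0 Hstep Heps w Hw a z); auto.
    intros v. rewrite <- Ha. apply Hg. }
  assert (lam * (eta / (lam + 1)) <= eta).
  { apply Rle_trans with ((lam + 1) * (eta / (lam + 1))).
    - apply Rmult_le_compat_r; [left; apply Rdiv_lt_0_compat|]; lra.
    - right; field; lra. }
  nra.
Qed.

End DualSequence.

Theorem lemma5p1 (X : NormedSpace) (HX : complete X)
  (N : option nat) (HN : match N with Some n => (1 <= n)%nat | None => True end)
  (e : nat -> X) (Hbasis : is_basis X N e)
  (estar : nat -> X -> R) (Hestar : biorthogonal X N e estar)
  (lam : R) (n : nat) (m : nat -> nat)
  (Hn : (1 <= n)%nat) (Hm1 : (1 <= m 1%nat)%nat)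
  (Hmono : forall j, (1 <= j < n)%nat -> (m j < m (S j))%nat)
  (HmN : lt_len (m n) N)
  (xs ys : X -> R)
  (Hxs : in_dual X xs) (Hxs0 : exists v, xs v <> 0)
  (Hys : in_dual X ys) (Hys0 : exists v, ys v <> 0)
  (HxsF : exists c : nat -> R, forall v,
            xs v = gsum 0 Rplus (seq 1 (m 1%nat)) (fun k => c k * estar k v))
  (HysF : forall j, (1 <= j <= m n)%nat -> ys (e j) = 0) :
  ((forall x : X, block_span vzero vadd vscal N e 1 (m 1%nat) x ->
      skipped_uncond_X X (shifted_len N (m 1%nat)) (shifted_seq X e (m 1%nat) x) lam) ->
   dual_skipped_uncond_basis X (Nat.max 2 n) (functional_seq X estar m n xs ys) lam)
  /\
  (skipped_uncond_X X N e lam ->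
   dual_skipped_uncond_basis X (Nat.max 2 n) (functional_seq X estar m n xs ys) lam).
Proof.
  destruct HxsF as [d Hd].
  (* both hypotheses give skipped unconditionality beyond [m_1] *)
  assert (Hm1N : lt_len (m 1%nat) N).
  { pose proof (m_mono m n Hmono 1%nat n ltac:(lia) Hn ltac:(lia)).
    unfold lt_len in *. destruct N; lia. }
  split; intros H; apply (dual_skipped X HX N e estar Hbasis Hestar lam n m Hn Hm1 Hmono HmN
                            xs ys Hxs Hys d Hd HysF); auto.
  - apply skipped_beyond_of_shifted; auto.
  - apply skipped_beyond_of_uncond; auto.
Qed.
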